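(* Let $(w,F)\in X\times\mathbb R$ be a solution of the height equation. (i) If $w>0$ on $T$, and if $F$ is such that $\Phi_p(p;1/F^2)\ge0$ for $p\in[-1,0]$, then $A(1/F^2)<0$. (ii) If $F=F_{\mathrm{cr}}$, then $w\equiv0$.
   Context: Fix $\alpha\in(0,1)$, $\rho\in C^{2+\alpha}([-1,0])$ with $\rho>0$, $\rho_p\le0$, and $H\in C^{3+\alpha}([-1,0])$ with $H(-1)=0$, $H(0)=1$, $H_p>0$. Let $R=\mathbb R\times(-1,0)$ (coordinates $(q,p)$), $T=\mathbb R\times\{0\}$, $B=\mathbb R\times\{-1\}$. For $F>0$, $(w,F)$ solves the height equation if $h=H+w$ satisfies $\big(-\frac{1+h_q^2}{2h_p^2}+\frac1{2H_p^2}\big)_p+\big(\frac{h_q}{h_p}\big)_q-\frac1{F^2}\rho_p(h-H)=0$ in $R$, $\frac{1+h_q^2}{2h_p^2}-\frac1{2H_p^2}+\frac1{F^2}\rho(h-1)=0$ on $T$, $h=0$ on $B$, and $0<\inf_R(H_p+w_p)<\infty$. $X$ consists of $w\in C^{3+\alpha}(\overline R)$ with finite $C^{3+\alpha}$ norm, even in $q$, with $w$ and its derivatives of order $\le2$ tending to $0$ uniformly as $|q|\to\infty$, and $w=0$ on $B$. For $\mu\ge0$, $\Phi(\cdot;\mu)$ is the solution of $(\Phi_p/H_p^3)_p-\mu\rho_p\Phi=0$ on $(-1,0)$, $\Phi(-1)=0$, $\Phi_p(-1)=1$, and $A(\mu):=-\Phi_p(0;\mu)/H_p(0)^3+\mu\rho(0)\Phi(0;\mu)$.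 $\mu_{\mathrm{cr}}$ is the smallest positive $\mu$ with $A(\mu)=0$ (equivalently, for which $(\phi_p/H_p^3)_p-\mu\rho_p\phi=0$, $\phi(-1)=0$, $-\phi_p(0)/H_p(0)^3+\mu\rho(0)\phi(0)=0$ has a nontrivial solution), and $F_{\mathrm{cr}}=\mu_{\mathrm{cr}}^{-1/2}$. *)

From Stdlib Require Import Reals List.
From Coquelicot Require Import Coquelicot.
Open Scope R_scope.

(* f : R -> R is k times differentiable (two-sided) on all of R, its
   derivatives of order <= k are continuous at every point of [-1,0], and the
   k-th derivative is alpha-Hoelder on [-1,0].  Every C^{k+alpha}([-1,0])
   function is the restriction of such an f (1-d Whitney extension), and all
   quantities in the theorem only involve values on [-1,0]. *)
Definition Ck_alpha_interval (k : nat) (a : R) (f : R -> R) : Prop :=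
  (forall (n : nat) (x : R), (n < k)%nat -> ex_derive (Derive_n f n) x) /\
  (forall (n : nat) (x : R), (n <= k)%nat -> -1 <= x <= 0 ->
      continuous (Derive_n f n) x) /\
  (exists C : R, forall x y : R, -1 <= x <= 0 -> -1 <= y <= 0 ->
      Rabs (Derive_n f k x - Derive_n f k y) <= C * Rpower (Rabs (x - y)) a).

Definition dq (f : R -> R -> R) : R -> R -> R :=
  fun q p => Derive (fun q' => f q' p) q.
Definition dp (f : R -> R -> R) : R -> R -> R :=
  fun q p => Derive (fun p' => f q p') p.

(* iterated partial derivative along a word of directions
   (true = d/dq, false = d/dp), the head of the list applied last *)
Fixpoint pd (l : list bool) (f : R -> R -> R) : R -> R -> R :=
  match l with
  | nil => f
  | b :: l' => (if b then dq else dp) (pd l' f)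
  end.

Definition in_Rbar (q p : R) : Prop := -1 <= p <= 0.
Definition in_R (q p : R) : Prop := -1 < p < 0.

Definition dist2 (q1 p1 q2 p2 : R) : R :=
  sqrt ((q1 - q2) ^ 2 + (p1 - p2) ^ 2).

(* As in the 1-d case
   w is given on R x R (an extension across the boundary lines), all iterated
   partial derivatives of order <= 3 exist, are jointly continuous on R-bar,
   bounded on R-bar, and those of order 3 are alpha-Hoelder on R-bar. *)
Definition C3_alpha_strip (a : R) (w : R -> R -> R) : Prop :=
  (forall (l : list bool) (q p : R), (length l < 3)%nat ->
      ex_derive (fun q' => pd l w q' p) q /\ ex_derive (fun p' => pd l w q p') p) /\
  (forall (l : list bool) (q p : R), (length l <= 3)%nat -> in_Rbar q p ->
      continuous (fun z : R * R => pd l w (fst z) (snd z)) (q, p)) /\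
  (forall l : list bool, (length l <= 3)%nat ->
      exists M : R, forall q p, in_Rbar q p -> Rabs (pd l w q p) <= M) /\
  (forall l : list bool, length l = 3%nat ->
      exists C : R, forall q1 p1 q2 p2, in_Rbar q1 p1 -> in_Rbar q2 p2 ->
        Rabs (pd l w q1 p1 - pd l w q2 p2) <= C * Rpower (dist2 q1 p1 q2 p2) a).

Definition in_X (a : R) (w : R -> R -> R) : Prop :=
  C3_alpha_strip a w /\
  (forall q p, in_Rbar q p -> w (- q) p = w q p) /\
  (forall l : list bool, (length l <= 2)%nat ->
      forall eps : R, 0 < eps -> exists M : R, forall q p,
        M <= Rabs q -> in_Rbar q p -> Rabs (pd l w q p) < eps) /\
  (forall q, w q (-1) = 0).

Definition height_eq (rho H : R -> R) (w : R -> R -> R) (F : R) : Prop :=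
  let h := fun q p => H p + w q p in
  let hq := dq h in
  let hp := dp h in
  0 < F /\
  (forall q p, in_R q p ->
     Derive (fun p' => - (1 + hq q p' ^ 2) / (2 * hp q p' ^ 2)
                       + 1 / (2 * Derive H p' ^ 2)) p
     + Derive (fun q' => hq q' p / hp q' p) q
     - / F ^ 2 * Derive rho p * (h q p - H p) = 0) /\
  (forall q, (1 + hq q 0 ^ 2) / (2 * hp q 0 ^ 2) - 1 / (2 * Derive H 0 ^ 2)
             + / F ^ 2 * rho 0 * (h q 0 - 1) = 0) /\
  (forall q, h q (-1) = 0) /\
  (* 0 < inf_R (H_p + w_p) < oo  (the upper bound is automatic for a
     real-valued function on a nonempty set) *)
  (exists delta : R, 0 < delta /\
     forall q p, in_R q p -> delta <= Derive H p + dp w q p).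

Definition is_Phi (rho H : R -> R) (Phi : R -> R -> R) : Prop :=
  forall mu : R, 0 <= mu ->
    (forall p, ex_derive (Phi mu) p) /\
    (forall p, -1 < p < 0 ->
       ex_derive (fun p' => Derive (Phi mu) p' / Derive H p' ^ 3) p /\
       Derive (fun p' => Derive (Phi mu) p' / Derive H p' ^ 3) p
         - mu * Derive rho p * Phi mu p = 0) /\
    Phi mu (-1) = 0 /\
    Derive (Phi mu) (-1) = 1.

Definition A_fun (rho H : R -> R) (Phi : R -> R -> R) (mu : R) : R :=
  - Derive (Phi mu) 0 / Derive H 0 ^ 3 + mu * rho 0 * Phi mu 0.

Definition is_mu_cr (rho H : R -> R) (Phi : R -> R -> R) (mu : R) : Prop :=
  0 < mu /\ A_fun rho H Phi mu = 0 /\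
  (forall mu', 0 < mu' < mu -> A_fun rho H Phi mu' <> 0).

From Stdlib Require Import Reals Lra Lia Psatz Classical.
From Coquelicot Require Import Coquelicot.
Open Scope R_scope.

(* Let [Phi] solve the Sturm-Liouville problem at [mu = 1/F^2] and [h = H + w].
   Integrating [Phi (h_q/h_p)_q] over [p] and integrating by parts with the height
   equation and the equation of [Phi] gives
     d/dq Int Phi h_q/h_p dp = - A(mu) w(q,0) - Int Phi_p N dp,
   where [N >= h_q^2 / (2 h_p^2) >= 0] by convexity of [x |-> 1/(2x^2)].  If
   [Phi_p >= 0] and [A w >= 0] on the top, the left side is the derivative of a
   nonincreasing function of [q] vanishing at infinity, so it is [0]: then
   [A w(q,0) = 0], and if moreover [A = 0] then [Phi_p > 0] forces [h_q = 0], hence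
   [w = 0].  This gives (i) by contradiction.  For (ii), a continuation argument in
   [mu] shows [Phi > 0] on [(-1,0]] up to [mu_cr], since [A] has no zero in
   [(0, mu_cr)]; the flux [Phi_p / H_p^3] is then nonincreasing and positive at the
   top, so [Phi_p > 0] at [mu_cr]. *)

(** * Calculus on a compact interval *)

Lemma ball_Rabs (x e y : R) : ball x e y <-> Rabs (y - x) < e.
Proof. split; intro H; exact H. Qed.

Lemma locally_open_interval (a b x : R) : a < x < b -> locally x (fun y => a < y < b).
Proof. intros [H1 H2]. apply (locally_interval _ x a b H1 H2). tauto. Qed.

Lemma continuity_pt_of_continuous (f : R -> R) x : continuous f x -> continuity_pt f x.
Proof. apply continuity_pt_filterlim. Qed.

Lemma continuous_of_ex_derive (f : R -> R) x : ex_derive f x -> continuous f x.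
Proof. apply (ex_derive_continuous (K:=R_AbsRing) (V:=R_NormedModule)). Qed.

Lemma cont_mult (f g : R -> R) x :
  continuous f x -> continuous g x -> continuous (fun y => f y * g y) x.
Proof. intros; apply (continuous_mult (K:=R_AbsRing)); auto. Qed.

Lemma cont_plus (f g : R -> R) x :
  continuous f x -> continuous g x -> continuous (fun y => f y + g y) x.
Proof. intros; apply (continuous_plus (V:=R_NormedModule)); auto. Qed.

Lemma cont_opp (f : R -> R) x : continuous f x -> continuous (fun y => - f y) x.
Proof. intros; apply (continuous_opp (V:=R_NormedModule)); auto. Qed.

Lemma cont_minus (f g : R -> R) x :
  continuous f x -> continuous g x -> continuous (fun y => f y - g y) x.
Proof. intros; apply (continuous_minus (V:=R_NormedModule)); auto. Qed.

Lemma cont_div (f g : R -> R) x :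
  continuous f x -> continuous g x -> g x <> 0 -> continuous (fun y => f y / g y) x.
Proof. intros; apply cont_mult; auto; apply continuous_Rinv_comp; auto. Qed.

Lemma cont_pow (f : R -> R) n x : continuous f x -> continuous (fun y => f y ^ n) x.
Proof.
  intros Hf. induction n; simpl; [apply continuous_const | apply cont_mult; auto].
Qed.

(* Continuity on [[a,b]] relative to [[a,b]], which is all the hypotheses give at
   the endpoints, is expressed as continuity on R of [fun y => f (clamp a b y)]. *)
Definition clamp (a b x : R) := Rmax a (Rmin b x).

Lemma clamp_in (a b x : R) : a <= b -> a <= clamp a b x <= b.
Proof. intros. unfold clamp, Rmax, Rmin. repeat destruct Rle_dec; lra. Qed.

Lemma clamp_id (a b x : R) : a <= x <= b -> clamp a b x = x.
Proof. intros. unfold clamp, Rmax, Rmin. repeat destruct Rle_dec; lra. Qed.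

Lemma clamp_lipschitz (a b x y : R) : a <= b ->
  Rabs (clamp a b x - clamp a b y) <= Rabs (x - y).
Proof.
  intros. unfold clamp, Rmax, Rmin, Rabs.
  repeat destruct Rle_dec; repeat destruct Rcase_abs; lra.
Qed.

Lemma continuous_clamp (a b x : R) : a <= b -> continuous (clamp a b) x.
Proof.
  intros Hab. apply filterlim_locally. intros eps. exists eps. intros y Hy.
  apply ball_Rabs in Hy. apply ball_Rabs.
  eapply Rle_lt_trans; [apply clamp_lipschitz; auto | exact Hy].
Qed.

Lemma continuous_clamp_comp (a b x : R) (f : R -> R) : a <= x <= b -> continuous f x ->
  continuous (fun y => f (clamp a b y)) x.
Proof.
  intros Hx Hf. apply (continuous_comp (clamp a b) f).
  - apply continuous_clamp; lra.
  - rewrite clamp_id; auto.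
Qed.

Lemma continuous_clamp_comp_everywhere (a b : R) (f : R -> R) : a <= b ->
  (forall x, a <= x <= b -> continuous (fun y => f (clamp a b y)) x) ->
  forall x, continuous (fun y => f (clamp a b y)) x.
Proof.
  intros Hab Hf x.
  apply continuous_ext with (f := fun y => (fun z => f (clamp a b z)) (clamp a b y)).
  { intros y. rewrite (clamp_id a b (clamp a b y)); auto. apply clamp_in; auto. }
  apply (continuous_comp (clamp a b) (fun z => f (clamp a b z))).
  - apply continuous_clamp; auto.
  - apply Hf, clamp_in; auto.
Qed.

Lemma continuous_of_clamp (f : R -> R) a b x : a < x < b ->
  continuous (fun y => f (clamp a b y)) x -> continuous f x.
Proof.
  intros Hx Hc. apply (continuous_ext_loc _ (fun y => f (clamp a b y))); auto.
  eapply filter_imp; [|apply (locally_open_interval a b x Hx)].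
  intros y Hy. rewrite clamp_id; lra.
Qed.

Lemma is_derive_clamp_comp (a b x : R) (f : R -> R) l : a < x < b -> is_derive f x l ->
  is_derive (fun y => f (clamp a b y)) x l.
Proof.
  intros Hx Hf. eapply is_derive_ext_loc; [|exact Hf].
  eapply filter_imp; [|apply (locally_open_interval a b x Hx)].
  intros y Hy. rewrite clamp_id; lra.
Qed.

Lemma is_RInt_derive_clamp (a b : R) (f df : R -> R) : a < b ->
  (forall x, a < x < b -> is_derive f x (df x)) ->
  (forall x, a <= x <= b -> continuous (fun y => f (clamp a b y)) x) ->
  (forall x, a <= x <= b -> continuous (fun y => df (clamp a b y)) x) ->
  is_RInt df a b (f b - f a).
Proof.
  intros Hab Hd Hf Hdf.
  set (dfc := fun y => df (clamp a b y)).
  assert (Hdfc : forall x, continuous dfc x)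
    by (apply continuous_clamp_comp_everywhere; [lra | exact Hdf]).
  assert (Hex : forall u v, ex_RInt dfc u v)
    by (intros; apply (@ex_RInt_continuous R_CompleteNormedModule); auto).
  assert (HI : forall x, is_RInt dfc a x (RInt dfc a x))
    by (intros; apply (@RInt_correct R_CompleteNormedModule); auto).
  set (K := fun x => f (clamp a b x) - RInt dfc a x).
  assert (HK : forall x, a < x < b -> is_derive K x 0).
  { intros x Hx. replace 0 with (df x - dfc x) by (unfold dfc; rewrite clamp_id; lra).
    apply (is_derive_minus (fun x => f (clamp a b x)) (fun x => RInt dfc a x)).
    - apply is_derive_clamp_comp; auto.
    - apply (is_derive_RInt dfc _ a); auto. apply filter_forall; auto. }
  assert (HKc : forall x, a <= x <= b -> continuity_pt K x).
  { intros x Hx. apply continuity_pt_of_continuous.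
    apply (cont_minus (fun x => f (clamp a b x)) (fun x => RInt dfc a x)); auto.
    apply (continuous_RInt_1 dfc a x). apply filter_forall; auto. }
  destruct (MVT_gen K a b (fun _ => 0)) as [c [_ Hc]];
    rewrite ?Rmin_left, ?Rmax_right; try lra; auto.
  unfold K in Hc. rewrite RInt_point, !clamp_id in Hc by lra.
  assert (E : RInt dfc a b = f b - f a) by (unfold zero in Hc; simpl in Hc; lra).
  apply is_RInt_ext with dfc.
  { intros x Hx. rewrite Rmin_left, Rmax_right in Hx by lra. unfold dfc. rewrite clamp_id; lra. }
  rewrite <- E. apply HI.
Qed.

Lemma is_RInt_product_clamp (a b : R) (f g df dg : R -> R) : a < b ->
  (forall x, a < x < b -> is_derive f x (df x)) ->
  (forall x, a < x < b -> is_derive g x (dg x)) ->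
  (forall x, a <= x <= b -> continuous (fun y => f (clamp a b y)) x) ->
  (forall x, a <= x <= b -> continuous (fun y => g (clamp a b y)) x) ->
  (forall x, a <= x <= b -> continuous (fun y => df (clamp a b y)) x) ->
  (forall x, a <= x <= b -> continuous (fun y => dg (clamp a b y)) x) ->
  is_RInt (fun x => df x * g x + f x * dg x) a b (f b * g b - f a * g a).
Proof.
  intros Hab Hf Hg Hfc Hgc Hdfc Hdgc.
  apply (is_RInt_derive_clamp a b (fun x => f x * g x)); auto.
  - intros x Hx. apply (is_derive_mult f g); auto. intros; apply Rmult_comm.
  - intros x Hx. apply (cont_mult (fun y => f (clamp a b y))); auto.
  - intros x Hx.
    apply (cont_plus (fun y => df (clamp a b y) * g (clamp a b y))); apply cont_mult; auto.
Qed.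

Lemma MVT_interior (f df : R -> R) (u v : R) : u < v ->
  (forall x, u < x < v -> is_derive f x (df x)) ->
  (forall x, u <= x <= v -> continuity_pt f x) ->
  exists c, u < c < v /\ f v - f u = df c * (v - u).
Proof.
  intros Huv Hd Hc.
  assert (pr1 : forall c, u < c < v -> derivable_pt f c).
  { intros c Hc'. apply ex_derive_Reals_0. eexists; apply Hd; auto. }
  assert (pr2 : forall c, u < c < v -> derivable_pt id c) by (intros; apply derivable_pt_id).
  destruct (MVT f id u v pr1 pr2 Huv Hc) as [c [P Hc2]].
  { intros; apply derivable_continuous_pt, derivable_pt_id. }
  exists c; split; auto.
  rewrite !Derive_Reals, (is_derive_unique f c (df c)) in Hc2 by auto.
  rewrite (is_derive_unique id c 1) in Hc2.
  - unfold id in Hc2. lra.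
  - apply is_derive_Reals, derivable_pt_lim_id.
Qed.

Lemma MVT_clamp (f df : R -> R) (a b u v : R) : a <= u -> u < v -> v <= b ->
  (forall x, a < x < b -> is_derive f x (df x)) ->
  (forall x, a <= x <= b -> continuous (fun y => f (clamp a b y)) x) ->
  exists c, u < c < v /\ f v - f u = df c * (v - u).
Proof.
  intros H1 H2 H3 Hd Hc.
  destruct (MVT_interior (fun y => f (clamp a b y)) df u v H2) as [c [Hc1 Hc2]].
  - intros x Hx. apply is_derive_clamp_comp; [lra|]. apply Hd; lra.
  - intros x Hx. apply continuity_pt_of_continuous, Hc; lra.
  - exists c; split; auto. rewrite !clamp_id in Hc2 by lra. auto.
Qed.

Lemma nonincreasing_of_derive_nonpos (f df : R -> R) (a b : R) :
  (forall x, a < x < b -> is_derive f x (df x)) ->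
  (forall x, a < x < b -> df x <= 0) ->
  (forall x, a <= x <= b -> continuous (fun y => f (clamp a b y)) x) ->
  forall u v, a <= u -> u <= v -> v <= b -> f v <= f u.
Proof.
  intros Hd Hs Hc u v H1 H2 H3. destruct (Req_dec u v) as [->|Hne]; [lra|].
  destruct (MVT_clamp f df a b u v) as [c [Hc1 Hc2]]; auto; try lra.
  assert (df c <= 0) by (apply Hs; lra). nra.
Qed.

Lemma lipschitz_of_derive_bound (f df : R -> R) (a b L : R) :
  (forall x, a < x < b -> is_derive f x (df x)) ->
  (forall x, a < x < b -> Rabs (df x) <= L) ->
  (forall x, a <= x <= b -> continuous (fun y => f (clamp a b y)) x) ->
  forall u v, a <= u <= b -> a <= v <= b -> Rabs (f u - f v) <= L * Rabs (u - v).
Proof.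
  intros Hd Hs Hc.
  assert (K : forall u v, a <= u -> u < v -> v <= b -> Rabs (f u - f v) <= L * Rabs (u - v)).
  { intros u v H1 H2 H3.
    destruct (MVT_clamp f df a b u v) as [c [Hc1 Hc2]]; auto.
    replace (f u - f v) with (- (df c * (v - u))) by lra.
    rewrite Rabs_Ropp, Rabs_mult, (Rabs_minus_sym u v).
    apply Rmult_le_compat_r; [apply Rabs_pos | apply Hs; lra]. }
  intros u v Hu Hv. destruct (Rtotal_order u v) as [H|[H|H]].
  - apply K; lra.
  - subst. rewrite !Rminus_diag, Rabs_R0, Rmult_0_r. lra.
  - rewrite (Rabs_minus_sym (f u)), (Rabs_minus_sym u). apply K; lra.
Qed.

Lemma lipschitz_of_derive_bound_open (g dg : R -> R) (a b L : R) :
  (forall x, a < x < b -> is_derive g x (dg x)) ->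
  (forall x, a < x < b -> Rabs (dg x) <= L) ->
  forall u v, a < u < b -> a < v < b -> Rabs (g u - g v) <= L * Rabs (u - v).
Proof.
  intros Hd Hb.
  assert (K : forall u v, a < u < b -> a < v < b -> u <= v ->
            Rabs (g u - g v) <= L * Rabs (u - v)).
  { intros u v Hu Hv Huv. apply (lipschitz_of_derive_bound g dg u v L); try lra.
    - intros; apply Hd; lra.
    - intros; apply Hb; lra.
    - intros x Hx. apply continuous_clamp_comp; auto.
      apply continuous_of_ex_derive. eexists; apply Hd; lra. }
  intros u v Hu Hv. destruct (Rle_dec u v); [apply K; auto; lra|].
  rewrite (Rabs_minus_sym (g u)), (Rabs_minus_sym u). apply K; auto; lra.
Qed.

Lemma continuous_clamp_of_lipschitz (g : R -> R) (a b L : R) : a <= b ->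
  (forall x y, a <= x <= b -> a <= y <= b -> Rabs (g x - g y) <= L * Rabs (x - y)) ->
  forall x, continuous (fun y => g (clamp a b y)) x.
Proof.
  intros Hab Hl x. apply filterlim_locally. intros eps.
  assert (HL : 0 < Rabs L + 1) by (pose proof (Rabs_pos L); lra).
  assert (He : 0 < eps / (Rabs L + 1)) by (apply Rdiv_lt_0_compat; [apply cond_pos|lra]).
  exists (mkposreal _ He). intros y Hy. apply ball_Rabs.
  eapply Rle_lt_trans; [apply Hl; apply clamp_in; auto|].
  pose proof (clamp_lipschitz a b y x Hab). pose proof (Rabs_pos (clamp a b y - clamp a b x)).
  pose proof (Rle_abs L). pose proof (Rabs_pos (y - x)).
  apply Rle_lt_trans with ((Rabs L + 1) * Rabs (y - x)).
  { apply Rle_trans with (Rabs L * Rabs (clamp a b y - clamp a b x)).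
    { apply Rmult_le_compat_r; [apply Rabs_pos | apply Rle_abs]. }
    apply Rle_trans with (Rabs L * Rabs (y - x)); [|lra].
    apply Rmult_le_compat_l; [apply Rabs_pos | auto]. }
  assert (E : pos eps = (Rabs L + 1) * (eps / (Rabs L + 1))) by (field; lra).
  rewrite E. apply Rmult_lt_compat_l; [lra | exact Hy].
Qed.

(* A difference quotient at [e] over a step towards [y] is a value [Derive f c]
   by the mean value theorem. *)
Lemma Derive_approx_towards (f : R -> R) (a b e y eps : R) :
  (forall x, a <= x <= b -> ex_derive f x) -> a <= e <= b -> a < y < b -> e <> y -> 0 < eps ->
  exists c, a < c < b /\ c <> y /\ Rabs (c - y) <= Rabs (e - y) /\
            Rabs (Derive f c - Derive f e) < eps.
Proof.
  intros Hex He Hy Hne Heps.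
  assert (Hd : derivable_pt_lim f e (Derive f e)).
  { apply is_derive_Reals, Derive_correct, Hex; auto. }
  destruct (Hd eps Heps) as [del Hdel].
  assert (Hdp := cond_pos del).
  assert (Hye : 0 < Rabs (y - e)) by (apply Rabs_pos_lt; lra).
  set (h := Rmin (del / 2) (Rabs (y - e) / 2)).
  assert (Hh : 0 < h) by (apply Rmin_pos; lra).
  assert (Hh1 : h <= del / 2) by apply Rmin_l.
  assert (Hh2 : h <= Rabs (y - e) / 2) by apply Rmin_r.
  destruct (Rlt_dec e y) as [Hlt|Hgt].
  - rewrite Rabs_right in Hh2 by lra.
    destruct (MVT_interior f (Derive f) e (e + h)) as [c [Hc1 Hc2]]; try lra.
    { intros; apply Derive_correct, Hex; lra. }
    { intros; apply continuity_pt_of_continuous, continuous_of_ex_derive, Hex; lra. }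
    assert (Q := Hdel h ltac:(lra) ltac:(rewrite Rabs_right; lra)).
    replace ((f (e + h) - f e) / h) with (Derive f c) in Q by (rewrite Hc2; field; lra).
    exists c. rewrite !Rabs_left by lra. repeat split; lra.
  - rewrite Rabs_left in Hh2 by lra.
    destruct (MVT_interior f (Derive f) (e - h) e) as [c [Hc1 Hc2]]; try lra.
    { intros; apply Derive_correct, Hex; lra. }
    { intros; apply continuity_pt_of_continuous, continuous_of_ex_derive, Hex; lra. }
    assert (Q := Hdel (- h) ltac:(lra) ltac:(rewrite Rabs_left; lra)).
    replace ((f (e + - h) - f e) / - h) with (Derive f c) in Q.
    + exists c. rewrite !Rabs_right by lra. repeat split; lra.
    + replace (e + - h) with (e - h) by ring.
      replace (f (e - h) - f e) with (- (Derive f c * (e - (e - h)))) by lra. field. lra.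
Qed.

Lemma Derive_lipschitz_endpoint (f : R -> R) (a b L e y : R) :
  (forall x, a <= x <= b -> ex_derive f x) ->
  (forall x z, a < x < b -> a < z < b ->
     Rabs (Derive f x - Derive f z) <= L * Rabs (x - z)) ->
  a <= e <= b -> a < y < b -> e <> y ->
  Rabs (Derive f e - Derive f y) <= L * Rabs (e - y).
Proof.
  intros Hex Hlip He Hy Hne.
  apply Rle_plus_epsilon. intros eps Heps.
  destruct (Derive_approx_towards f a b e y eps) as [c [Hcab [Hcy [Hce Hc]]]]; auto.
  assert (Hl := Hlip c y Hcab Hy).
  assert (HL : 0 <= L).
  { assert (0 < Rabs (c - y)) by (apply Rabs_pos_lt; lra).
    pose proof (Rabs_pos (Derive f c - Derive f y)). nra. }
  pose proof (Rabs_triang (Derive f e - Derive f c) (Derive f c - Derive f y)).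
  replace (Derive f e - Derive f c + (Derive f c - Derive f y))
    with (Derive f e - Derive f y) in * by ring.
  rewrite Rabs_minus_sym in Hc.
  assert (L * Rabs (c - y) <= L * Rabs (e - y)) by (apply Rmult_le_compat_l; auto).
  lra.
Qed.

Lemma Derive_lipschitz_closure (f : R -> R) (a b L : R) :
  (forall x, a <= x <= b -> ex_derive f x) ->
  (forall x z, a < x < b -> a < z < b ->
     Rabs (Derive f x - Derive f z) <= L * Rabs (x - z)) ->
  forall x y, a <= x <= b -> a <= y <= b ->
  Rabs (Derive f x - Derive f y) <= L * Rabs (x - y).
Proof.
  intros Hex Hlip x y Hx Hy.
  destruct (Req_dec x y) as [->|Hne].
  { rewrite !Rminus_diag, Rabs_R0, Rmult_0_r. lra. }
  set (m := (x + y) / 2).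
  assert (Hm : a < m < b) by (unfold m; destruct (Rlt_dec x y); lra).
  assert (H1 := Derive_lipschitz_endpoint f a b L x m Hex Hlip Hx Hm ltac:(unfold m; lra)).
  assert (H2 := Derive_lipschitz_endpoint f a b L y m Hex Hlip Hy Hm ltac:(unfold m; lra)).
  rewrite (Rabs_minus_sym (Derive f y)), (Rabs_minus_sym y) in H2.
  pose proof (Rabs_triang (Derive f x - Derive f m) (Derive f m - Derive f y)).
  replace (Derive f x - Derive f m + (Derive f m - Derive f y))
    with (Derive f x - Derive f y) in * by ring.
  assert (Rabs (x - m) + Rabs (m - y) = Rabs (x - y)).
  { unfold m. destruct (Rlt_dec x y); [rewrite !Rabs_left | rewrite !Rabs_right]; lra. }
  nra.
Qed.

Lemma continuous_ge_of_interior (g : R -> R) (a b x d : R) : a < b -> a <= x <= b ->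
  continuous g x -> (forall y, a < y < b -> d <= g y) -> d <= g x.
Proof.
  intros Hab Hx Hc Hy.
  destruct (Rle_lt_dec d (g x)) as [|Hlt]; auto. exfalso.
  assert (He : 0 < d - g x) by lra.
  destruct (proj1 (filterlim_locally g (g x)) Hc (mkposreal _ He)) as [e He2].
  assert (0 < e) by apply cond_pos.
  set (e' := Rmin (e / 2) ((b - a) / 4)).
  assert (0 < e') by (apply Rmin_pos; lra).
  assert (e' <= e / 2) by apply Rmin_l. assert (e' <= (b - a) / 4) by apply Rmin_r.
  set (y := if Rlt_dec x ((a + b) / 2) then x + e' else x - e').
  assert (Hyab : a < y < b) by (unfold y; destruct Rlt_dec; lra).
  assert (Hb : ball x e y).
  { apply ball_Rabs. unfold y. destruct Rlt_dec; [rewrite Rabs_right | rewrite Rabs_left]; lra. }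
  assert (Q : Rabs (g y - g x) < d - g x) by exact (He2 y Hb).
  apply Rabs_lt_between in Q. specialize (Hy y Hyab). lra.
Qed.

Lemma continuous_eq_of_interior (g : R -> R) a b x c : a < b -> a <= x <= b ->
  continuous g x -> (forall y, a < y < b -> g y = c) -> g x = c.
Proof.
  intros Hab Hx Hc Hy.
  assert (c <= g x)
    by (apply (continuous_ge_of_interior g a b x c); auto; intros; rewrite Hy; auto; lra).
  assert (- c <= - g x).
  { apply (continuous_ge_of_interior (fun y => - g y) a b x (- c)); auto.
    - apply cont_opp; auto.
    - intros; rewrite Hy; auto; lra. }
  lra.
Qed.

Lemma RInt_nonneg_eq_0 (k : R -> R) a b : a < b ->
  (forall x, a <= x <= b -> continuous (fun y => k (clamp a b y)) x) ->
  (forall x, a < x < b -> 0 <= k x) ->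
  ex_RInt k a b -> RInt k a b = 0 -> forall t, a < t < b -> k t = 0.
Proof.
  intros Hab Hc Hnn Hex Hz t0 Ht0.
  destruct (Req_dec (k t0) 0) as [|Hne]; auto. exfalso.
  assert (Hp : 0 < k t0) by (specialize (Hnn t0 Ht0); lra).
  assert (Hk0 : continuous k t0) by (apply (continuous_of_clamp k a b); auto; apply Hc; lra).
  assert (Hh : 0 < k t0 / 2) by lra.
  destruct (proj1 (filterlim_locally k (k t0)) Hk0 (mkposreal _ Hh)) as [e He].
  assert (0 < e) by apply cond_pos.
  set (e' := Rmin (e / 2) (Rmin ((t0 - a) / 2) ((b - t0) / 2))).
  assert (e' <= e / 2) by apply Rmin_l.
  assert (e' <= (t0 - a) / 2) by (eapply Rle_trans; [apply Rmin_r|apply Rmin_l]).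
  assert (e' <= (b - t0) / 2) by (eapply Rle_trans; [apply Rmin_r|apply Rmin_r]).
  assert (0 < e') by (apply Rmin_pos; [lra| apply Rmin_pos; lra]).
  set (u := t0 - e'). set (v := t0 + e').
  assert (Hpos : 0 < RInt k u v).
  { apply RInt_gt_0; unfold u, v; try lra.
    - intros x Hx. assert (Hb : ball t0 e x) by (apply ball_Rabs, Rabs_def1; lra).
      assert (Q : Rabs (k x - k t0) < k t0 / 2) by exact (He x Hb).
      apply Rabs_lt_between in Q. lra.
    - intros x Hx. apply (continuous_of_clamp k a b); [lra | apply Hc; lra]. }
  assert (E1 : ex_RInt k a v) by (apply (ex_RInt_Chasles_1 k a v b); auto; unfold v; lra).
  assert (E2 : ex_RInt k a u) by (apply (ex_RInt_Chasles_1 k a u v); auto; unfold u, v; lra).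
  assert (E3 : ex_RInt k u v) by (apply (ex_RInt_Chasles_2 k a u v); auto; unfold u, v; lra).
  assert (E4 : ex_RInt k v b) by (apply (ex_RInt_Chasles_2 k a v b); auto; unfold v; lra).
  assert (C1 := RInt_Chasles k a u v E2 E3).
  assert (C2 := RInt_Chasles k a v b E1 E4).
  assert (0 <= RInt k a u)
    by (apply RInt_ge_0; auto; unfold u in *; [lra | intros; apply Hnn; lra]).
  assert (0 <= RInt k v b)
    by (apply RInt_ge_0; auto; unfold v in *; [lra | intros; apply Hnn; lra]).
  unfold plus in C1, C2. simpl in C1, C2. lra.
Qed.

Lemma continuous_bounded (f : R -> R) (a b : R) : a <= b ->
  (forall x, a <= x <= b -> continuous f x) ->
  exists B, 0 <= B /\ forall x, a <= x <= b -> Rabs (f x) <= B.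
Proof.
  intros Hab Hc.
  destruct (continuity_ab_maj (fun x => Rabs (f x)) a b Hab) as [M [HM _]].
  { intros c Hc'. apply continuity_pt_of_continuous, continuous_Rabs_comp; auto. }
  exists (Rabs (f M)). split; [apply Rabs_pos | auto].
Qed.

Lemma continuous_pos_lower_bound (f : R -> R) (a b : R) : a <= b ->
  (forall x, a <= x <= b -> continuous f x) -> (forall x, a <= x <= b -> 0 < f x) ->
  exists m, 0 < m /\ forall x, a <= x <= b -> m <= f x.
Proof.
  intros Hab Hc Hp.
  destruct (continuity_ab_min f a b Hab) as [M [HM HM2]].
  { intros c Hc'. apply continuity_pt_of_continuous; auto. }
  exists (f M). split; auto.
Qed.

Lemma pos_of_derive_pos (f : R -> R) a p : (forall x, ex_derive f x) -> f a = 0 -> a < p ->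
  (forall x, a < x < p -> 0 < Derive f x) -> 0 < f p.
Proof.
  intros Hd H0 Hp Hpos.
  destruct (MVT_interior f (Derive f) a p Hp) as [c [Hc1 Hc2]].
  - intros; apply Derive_correct; auto.
  - intros; apply continuity_pt_of_continuous, continuous_of_ex_derive; auto.
  - rewrite H0 in Hc2. specialize (Hpos c Hc1). nra.
Qed.

(* [(E + c/K) e^{-K (x - a)}] is nonincreasing. *)
Lemma gronwall (E dE : R -> R) (a b K c : R) : a < b -> 0 < K -> 0 <= c -> 0 <= E a ->
  (forall x, a <= x <= b -> continuous (fun y => E (clamp a b y)) x) ->
  (forall p, a < p < b -> is_derive E p (dE p)) ->
  (forall p, a < p < b -> dE p <= K * E p + c) ->
  forall p, a <= p <= b -> E p <= (E a + c / K) * exp (K * (b - a)).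
Proof.
  intros Hab HK Hc HE0 HEc Hd Hb p Hp.
  set (Z := fun x => (E x + c / K) * exp (- K * (x - a))).
  assert (HZ : Z p <= Z a).
  { apply (nonincreasing_of_derive_nonpos Z
      (fun x => (dE x - K * E x - c) * exp (- K * (x - a))) a b); try lra.
    - intros x Hx. unfold Z.
      replace ((dE x - K * E x - c) * exp (- K * (x - a))) with
        (dE x * exp (- K * (x - a)) + (E x + c / K) * (- K * exp (- K * (x - a))))
        by (field; lra).
      apply (is_derive_mult (fun x => E x + c / K) (fun x => exp (- K * (x - a)))).
      + rewrite <- (Rplus_0_r (dE x)). apply (is_derive_plus E (fun _ => c / K)).
        * apply Hd; auto.
        * auto_derive; auto.
      + auto_derive; auto. unfold Rminus. ring.
      + intros; apply Rmult_comm.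
    - intros x Hx. specialize (Hb x Hx). pose proof (exp_pos (- K * (x - a))). nra.
    - intros x Hx. unfold Z.
      apply (cont_mult (fun y => E (clamp a b y) + c / K)).
      + apply cont_plus; [apply HEc; auto | apply continuous_const].
      + apply (continuous_clamp_comp a b x (fun y => exp (- K * (y - a)))); auto.
        apply continuous_of_ex_derive. auto_derive. auto. }
  unfold Z in HZ. rewrite Rminus_diag, Rmult_0_r, exp_0, Rmult_1_r in HZ.
  assert (E1 : E p + c / K <= (E a + c / K) * exp (K * (p - a))).
  { replace (E p + c / K) with ((E p + c / K) * exp (- K * (p - a)) * exp (K * (p - a))).
    - apply Rmult_le_compat_r; [left; apply exp_pos | auto].
    - rewrite Rmult_assoc, <- exp_plus.
      replace (- K * (p - a) + K * (p - a)) with 0 by ring. rewrite exp_0; ring. }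
  assert (E2 : exp (K * (p - a)) <= exp (K * (b - a))).
  { destruct (Req_dec p b) as [->|]; [lra | left; apply exp_increasing; nra]. }
  assert (0 <= c / K) by (apply Rdiv_le_0_compat; lra).
  assert ((E a + c / K) * exp (K * (p - a)) <= (E a + c / K) * exp (K * (b - a)))
    by (apply Rmult_le_compat_l; lra).
  lra.
Qed.

Lemma nonincreasing_of_derive_nonpos_R (G dG : R -> R) :
  (forall q, is_derive G q (dG q)) -> (forall q, dG q <= 0) ->
  forall u v, u <= v -> G v <= G u.
Proof.
  intros Hd Hs u v Huv. destruct (Req_dec u v) as [->|]; [lra|].
  destruct (MVT_interior G dG u v) as [c [Hc1 Hc2]]; [lra | intros; apply Hd | |].
  - intros x _. apply continuity_pt_of_continuous, continuous_of_ex_derive.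
    eexists; apply Hd.
  - specialize (Hs c). nra.
Qed.

Lemma nonincreasing_vanishing_at_infinity (G : R -> R) :
  (forall u v, u <= v -> G v <= G u) ->
  (forall eps, 0 < eps -> exists M, forall q, M <= Rabs q -> Rabs (G q) <= eps) ->
  forall q, G q = 0.
Proof.
  intros Hm Hlim q. apply Rabs_eq_0, Rle_antisym; [|apply Rabs_pos].
  apply Rle_plus_epsilon. intros eps Heps. rewrite Rplus_0_l.
  destruct (Hlim eps Heps) as [M HM].
  set (Q := Rabs q + Rabs M + 1).
  assert (HQ1 : M <= Rabs Q).
  { unfold Q. pose proof (Rabs_pos q). pose proof (Rle_abs M).
    rewrite Rabs_right; pose proof (Rabs_pos M); lra. }
  assert (A1 := HM Q HQ1). assert (A2 := HM (- Q) ltac:(rewrite Rabs_Ropp; auto)).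
  assert (G Q <= G q) by (apply Hm; unfold Q; pose proof (Rle_abs q); pose proof (Rabs_pos M); lra).
  assert (G q <= G (- Q)).
  { apply Hm. unfold Q. pose proof (Rle_abs (- q)). rewrite Rabs_Ropp in *.
    pose proof (Rabs_pos M). lra. }
  apply Rabs_le_between in A1. apply Rabs_le_between in A2.
  apply Rabs_le_between. lra.
Qed.

Lemma derive_vanishing_of_nonincreasing (G dG : R -> R) :
  (forall q, is_derive G q (dG q)) -> (forall q, dG q <= 0) ->
  (forall eps, 0 < eps -> exists M, forall q, M <= Rabs q -> Rabs (G q) <= eps) ->
  forall q, dG q = 0.
Proof.
  intros Hd Hs Hlim q.
  assert (Hz := nonincreasing_vanishing_at_infinity G
                  (nonincreasing_of_derive_nonpos_R G dG Hd Hs) Hlim).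
  assert (Hd' : is_derive (fun _ => 0) q (dG q)) by (eapply is_derive_ext; [|apply Hd]; auto).
  apply is_derive_unique in Hd'. rewrite Derive_const in Hd'. auto.
Qed.

Lemma constant_vanishing_at_infinity (g : R -> R) : (forall q, is_derive g q 0) ->
  (forall eps, 0 < eps -> exists M, forall q, M <= Rabs q -> Rabs (g q) < eps) ->
  forall q, g q = 0.
Proof.
  intros Hd Hl. apply nonincreasing_vanishing_at_infinity.
  - apply (nonincreasing_of_derive_nonpos_R g (fun _ => 0)); auto; intros; lra.
  - intros eps Heps. destruct (Hl eps Heps) as [M HM].
    exists M. intros q Hq. left. auto.
Qed.

Lemma Rabs_double_mult_le (a b : R) : Rabs (2 * a * b) <= a ^ 2 + b ^ 2.
Proof.
  rewrite !Rabs_mult, (Rabs_right 2) by lra.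
  assert (0 <= (Rabs a - Rabs b) ^ 2) by apply pow2_ge_0.
  rewrite <- (pow2_abs a), <- (pow2_abs b). nra.
Qed.

Lemma Rmult_le_Rabs_bound (a b B : R) : Rabs b <= B -> a * b <= Rabs a * B.
Proof.
  intros Hb. eapply Rle_trans; [apply Rle_abs|]. rewrite Rabs_mult.
  apply Rmult_le_compat_l; [apply Rabs_pos | auto].
Qed.

Lemma Rabs_le_sq_1 (x : R) : Rabs x <= x ^ 2 + 1.
Proof. unfold Rabs; destruct (Rcase_abs x); nra. Qed.

Lemma Rabs_le_of_sq_le (x y : R) : 0 <= y -> x ^ 2 <= y ^ 2 -> Rabs x <= y.
Proof.
  intros Hy Hxy. rewrite <- (pow2_abs x) in Hxy. pose proof (Rabs_pos x).
  destruct (Rle_lt_dec (Rabs x) y); auto. nra.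
Qed.

Lemma is_derive_sq (f : R -> R) x df :
  is_derive f x df -> is_derive (fun y => f y ^ 2) x (2 * f x * df).
Proof.
  intros Hf. replace (2 * f x * df) with (INR 2 * df * f x ^ Init.Nat.pred 2) by (simpl; ring).
  apply (is_derive_pow f 2 x df); auto.
Qed.

Lemma linear_system_energy (u v a b r : R -> R) (x0 x1 A B Rb : R) : x0 < x1 ->
  0 <= A -> 0 <= B ->
  (forall x, x0 <= x <= x1 -> Rabs (a x) <= A) ->
  (forall x, x0 <= x <= x1 -> Rabs (b x) <= B) ->
  (forall x, x0 <= x <= x1 -> Rabs (r x) <= Rb) ->
  (forall x, x0 < x < x1 -> is_derive u x (a x * v x)) ->
  (forall x, x0 < x < x1 -> is_derive v x (b x * u x + r x)) ->
  (forall x, x0 <= x <= x1 -> continuous (fun y => u (clamp x0 x1 y)) x) ->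
  (forall x, x0 <= x <= x1 -> continuous (fun y => v (clamp x0 x1 y)) x) ->
  forall p, x0 <= p <= x1 -> u p ^ 2 + v p ^ 2 <=
    (u x0 ^ 2 + v x0 ^ 2 + Rb ^ 2 / (A + B + 1)) * exp ((A + B + 1) * (x1 - x0)).
Proof.
  intros Hx HA HB Ha Hb Hr Hu Hv Huc Hvc.
  apply (gronwall (fun x => u x ^ 2 + v x ^ 2)
           (fun x => 2 * u x * (a x * v x) + 2 * v x * (b x * u x + r x))); try lra.
  - apply pow2_ge_0.
  - apply Rplus_le_le_0_compat; apply pow2_ge_0.
  - intros x Hx'. apply (cont_plus (fun y => u (clamp x0 x1 y) ^ 2)); apply cont_pow; auto.
  - intros x Hx'. apply (is_derive_plus (fun y => u y ^ 2) (fun y => v y ^ 2));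
      apply is_derive_sq; auto.
  - intros x Hx'.
    assert (A1 : 2 * u x * (a x * v x) <= (u x ^ 2 + v x ^ 2) * A).
    { replace (2 * u x * (a x * v x)) with ((2 * u x * v x) * a x) by ring.
      eapply Rle_trans; [apply Rmult_le_Rabs_bound, Ha; lra|].
      apply Rmult_le_compat_r; [auto | apply Rabs_double_mult_le]. }
    assert (A2 : 2 * v x * (b x * u x) <= (u x ^ 2 + v x ^ 2) * B).
    { replace (2 * v x * (b x * u x)) with ((2 * u x * v x) * b x) by ring.
      eapply Rle_trans; [apply Rmult_le_Rabs_bound, Hb; lra|].
      apply Rmult_le_compat_r; [auto | apply Rabs_double_mult_le]. }
    assert (A3 : 2 * v x * r x <= v x ^ 2 + Rb ^ 2).
    { eapply Rle_trans; [apply Rle_abs | eapply Rle_trans; [apply Rabs_double_mult_le|]].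
      assert (Rabs (r x) <= Rb) by (apply Hr; lra).
      rewrite <- (pow2_abs (r x)). pose proof (Rabs_pos (r x)).
      assert (Rabs (r x) ^ 2 <= Rb ^ 2) by (apply pow_incr; lra). lra. }
    assert (0 <= u x ^ 2) by apply pow2_ge_0. assert (0 <= v x ^ 2) by apply pow2_ge_0.
    nra.
Qed.

(** * The Sturm-Liouville problem for [Phi] *)

Record regular_background (rho H : R -> R) : Prop := {
  Derive_rho_continuous : forall x, -1 <= x <= 0 -> continuous (Derive rho) x;
  rho_pos : forall p, -1 <= p <= 0 -> 0 < rho p;
  Derive_rho_nonpos : forall p, -1 <= p <= 0 -> Derive rho p <= 0;
  H_ex_derive : forall x, ex_derive H x;
  Derive_H_ex_derive : forall x, ex_derive (Derive H) x;
  Derive2_H_continuous : forall x, -1 <= x <= 0 -> continuous (Derive (Derive H)) x;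
  Derive_H_pos : forall p, -1 <= p <= 0 -> 0 < Derive H p }.

Lemma regular_background_of_Ck alpha rho H :
  Ck_alpha_interval 2 alpha rho ->
  (forall p, -1 <= p <= 0 -> 0 < rho p) ->
  (forall p, -1 <= p <= 0 -> Derive rho p <= 0) ->
  Ck_alpha_interval 3 alpha H ->
  (forall p, -1 <= p <= 0 -> 0 < Derive H p) -> regular_background rho H.
Proof.
  intros [_ [Rc _]] Rp Rn [Hd [Hc _]] Hp. constructor; auto.
  - intros x Hx. exact (Rc 1%nat x ltac:(lia) Hx).
  - intros x. exact (Hd 0%nat x ltac:(lia)).
  - intros x. exact (Hd 1%nat x ltac:(lia)).
  - intros x Hx. exact (Hc 2%nat x ltac:(lia) Hx).
Qed.

Definition flux (H f : R -> R) (p : R) := Derive f p / Derive H p ^ 3.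

Lemma A_fun_flux rho H Phi mu :
  A_fun rho H Phi mu = - flux H (Phi mu) 0 + mu * rho 0 * Phi mu 0.
Proof. unfold A_fun, flux, Rdiv. ring. Qed.

Section Stratified.

Variables (rho H : R -> R) (Phi : R -> R -> R).
Hypothesis Hbg : regular_background rho H.
Hypothesis HPhi : is_Phi rho H Phi.

Lemma Derive_H_neq_0 p : -1 <= p <= 0 -> Derive H p <> 0.
Proof. intros Hp. specialize (Derive_H_pos _ _ Hbg p Hp). lra. Qed.

Lemma continuous_Derive_H x : continuous (Derive H) x.
Proof. apply continuous_of_ex_derive, (Derive_H_ex_derive _ _ Hbg). Qed.

Lemma Phi_ex_derive mu x : 0 <= mu -> ex_derive (Phi mu) x.
Proof. intros Hmu. apply (HPhi mu Hmu). Qed.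

Lemma continuous_Phi mu x : 0 <= mu -> continuous (Phi mu) x.
Proof. intros Hmu. apply continuous_of_ex_derive, Phi_ex_derive, Hmu. Qed.

Lemma Phi_bottom mu : 0 <= mu -> Phi mu (-1) = 0.
Proof. intros Hmu. apply (HPhi mu Hmu). Qed.

Lemma Derive_Phi_bottom mu : 0 <= mu -> Derive (Phi mu) (-1) = 1.
Proof. intros Hmu. apply (HPhi mu Hmu). Qed.

Lemma flux_bottom mu : 0 <= mu -> flux H (Phi mu) (-1) = / Derive H (-1) ^ 3.
Proof. intros Hmu. unfold flux. rewrite Derive_Phi_bottom by auto. unfold Rdiv. ring. Qed.

Lemma flux_is_derive mu p : 0 <= mu -> -1 < p < 0 ->
  is_derive (flux H (Phi mu)) p (mu * Derive rho p * Phi mu p).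
Proof.
  intros Hmu Hp. destruct (proj1 (proj2 (HPhi mu Hmu)) p Hp) as [He Heq].
  replace (mu * Derive rho p * Phi mu p) with (Derive (flux H (Phi mu)) p)
    by (unfold flux; lra).
  apply Derive_correct. exact He.
Qed.

Lemma Derive_Phi_eq mu p : -1 <= p <= 0 ->
  Derive (Phi mu) p = Derive H p ^ 3 * flux H (Phi mu) p.
Proof.
  intros Hp. unfold flux. field. apply Derive_H_neq_0; auto.
Qed.

Lemma flux_lipschitz_open mu : 0 <= mu ->
  exists L, 0 <= L /\ forall u v, -1 < u < 0 -> -1 < v < 0 ->
    Rabs (flux H (Phi mu) u - flux H (Phi mu) v) <= L * Rabs (u - v).
Proof.
  intros Hmu.
  destruct (continuous_bounded (Phi mu) (-1) 0) as [BF [HBF0 HBF]];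
    [lra | intros; apply continuous_Phi; auto |].
  destruct (continuous_bounded (Derive rho) (-1) 0) as [Br [HBr0 HBr]];
    [lra | apply (Derive_rho_continuous _ _ Hbg) |].
  exists (mu * (Br * BF)). split; [apply Rmult_le_pos; [|apply Rmult_le_pos]; auto|].
  apply (lipschitz_of_derive_bound_open _ (fun p => mu * Derive rho p * Phi mu p)).
  - intros; apply flux_is_derive; auto.
  - intros x Hx. rewrite !Rabs_mult, (Rabs_right mu), Rmult_assoc by lra.
    apply Rmult_le_compat_l; auto.
    apply Rmult_le_compat; try apply Rabs_pos; [apply HBr | apply HBF]; lra.
Qed.

Lemma Derive_H_cube_lipschitz :
  exists L, forall u v, -1 <= u <= 0 -> -1 <= v <= 0 ->
    Rabs (Derive H u ^ 3 - Derive H v ^ 3) <= L * Rabs (u - v).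
Proof.
  destruct (continuous_bounded (Derive H) (-1) 0) as [B1 [HB10 HB1]];
    [lra | intros; apply continuous_Derive_H |].
  destruct (continuous_bounded (Derive (Derive H)) (-1) 0) as [B2 [HB20 HB2]];
    [lra | apply (Derive2_H_continuous _ _ Hbg) |].
  exists (3 * (B1 ^ 2 * B2)).
  apply (lipschitz_of_derive_bound (fun p => Derive H p ^ 3)
           (fun p => INR 3 * Derive (Derive H) p * Derive H p ^ 2)).
  - intros x Hx. apply (is_derive_pow (Derive H) 3 x), Derive_correct.
    apply (Derive_H_ex_derive _ _ Hbg).
  - intros x Hx. rewrite !Rabs_mult, <- RPow_abs. simpl INR. rewrite Rabs_right by lra.
    assert (Rabs (Derive H x) ^ 2 <= B1 ^ 2)
      by (apply pow_incr; split; [apply Rabs_pos | apply HB1; lra]).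
    assert (Rabs (Derive (Derive H) x) <= B2) by (apply HB2; lra).
    pose proof (Rabs_pos (Derive (Derive H) x)).
    assert (0 <= Rabs (Derive H x) ^ 2) by (apply pow_le, Rabs_pos).
    nra.
  - intros x Hx. apply (continuous_clamp_comp (-1) 0 x (fun p => Derive H p ^ 3)); auto.
    apply cont_pow, continuous_Derive_H.
Qed.

Lemma Derive_Phi_lipschitz mu : 0 <= mu ->
  exists L, forall x y, -1 <= x <= 0 -> -1 <= y <= 0 ->
    Rabs (Derive (Phi mu) x - Derive (Phi mu) y) <= L * Rabs (x - y).
Proof.
  intros Hmu.
  destruct (flux_lipschitz_open mu Hmu) as [L1 [HL10 Hg]].
  destruct Derive_H_cube_lipschitz as [L2 Hk].
  destruct (continuous_bounded (fun p => Derive H p ^ 3) (-1) 0) as [Bk [HBk0 HBk]];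
    [lra | intros; apply cont_pow, continuous_Derive_H |].
  set (g := flux H (Phi mu)) in *. set (k := fun p => Derive H p ^ 3) in *.
  set (Bg := Rabs (g (-1/2)) + L1).
  assert (HBg : forall u, -1 < u < 0 -> Rabs (g u) <= Bg).
  { intros u Hu. assert (Q := Hg u (-1/2) Hu ltac:(lra)).
    assert (Rabs (u - -1/2) <= 1) by (apply Rabs_le; lra).
    pose proof (Rabs_triang_inv (g u) (g (-1/2))). unfold Bg. nra. }
  exists (Bk * L1 + Bg * L2).
  apply Derive_lipschitz_closure; [intros; apply Phi_ex_derive; auto|].
  intros x z Hx Hz. rewrite !Derive_Phi_eq by lra. change (Rabs (k x * g x - k z * g z)
    <= (Bk * L1 + Bg * L2) * Rabs (x - z)).
  replace (k x * g x - k z * g z) with (k x * (g x - g z) + g z * (k x - k z)) by ring.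
  eapply Rle_trans; [apply Rabs_triang|]. rewrite !Rabs_mult.
  assert (A1 := HBk x ltac:(lra)). assert (A2 := Hg x z Hx Hz).
  assert (A3 := HBg z Hz). assert (A4 := Hk x z ltac:(lra) ltac:(lra)).
  pose proof (Rabs_pos (k x)). pose proof (Rabs_pos (g z)).
  pose proof (Rabs_pos (g x - g z)). pose proof (Rabs_pos (k x - k z)).
  apply Rle_trans with (Bk * (L1 * Rabs (x - z)) + Bg * (L2 * Rabs (x - z))); [|lra].
  apply Rplus_le_compat; apply Rmult_le_compat; auto.
Qed.

Lemma Derive_Phi_clamp_continuous mu x : 0 <= mu ->
  continuous (fun y => Derive (Phi mu) (clamp (-1) 0 y)) x.
Proof.
  intros Hmu. destruct (Derive_Phi_lipschitz mu Hmu) as [L HL].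
  apply (continuous_clamp_of_lipschitz _ (-1) 0 L); auto; lra.
Qed.

Lemma flux_clamp_continuous mu x : 0 <= mu ->
  continuous (fun y => flux H (Phi mu) (clamp (-1) 0 y)) x.
Proof.
  intros Hmu. apply continuous_clamp_comp_everywhere; [lra|]. intros t Ht.
  apply (cont_div (fun y => Derive (Phi mu) (clamp (-1) 0 y))
                  (fun y => Derive H (clamp (-1) 0 y) ^ 3)).
  - apply Derive_Phi_clamp_continuous; auto.
  - apply cont_pow, continuous_clamp_comp, continuous_Derive_H; auto.
  - rewrite clamp_id by auto. apply pow_nonzero, Derive_H_neq_0; auto.
Qed.

Lemma background_bounds : exists BH Br, 0 <= BH /\ 0 <= Br /\
  (forall p, -1 <= p <= 0 -> Rabs (Derive H p ^ 3) <= BH) /\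
  (forall p, -1 <= p <= 0 -> Rabs (Derive rho p) <= Br).
Proof.
  destruct (continuous_bounded (fun p => Derive H p ^ 3) (-1) 0) as [BH [HBH0 HBH]];
    [lra | intros; apply cont_pow, continuous_Derive_H |].
  destruct (continuous_bounded (Derive rho) (-1) 0) as [Br [HBr0 HBr]];
    [lra | apply (Derive_rho_continuous _ _ Hbg) |].
  exists BH, Br. auto.
Qed.

Lemma Phi_is_derive mu x : 0 <= mu -> -1 < x < 0 ->
  is_derive (Phi mu) x (Derive H x ^ 3 * flux H (Phi mu) x).
Proof.
  intros Hmu Hx. rewrite <- Derive_Phi_eq by lra. apply Derive_correct, Phi_ex_derive; auto.
Qed.

Lemma Phi_clamp_continuous mu x : 0 <= mu -> -1 <= x <= 0 ->
  continuous (fun y => Phi mu (clamp (-1) 0 y)) x.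
Proof. intros Hmu Hx. apply continuous_clamp_comp, continuous_Phi; auto. Qed.

Lemma Phi_flux_difference_system mu nu : 0 <= mu -> 0 <= nu ->
  (forall x, -1 < x < 0 -> is_derive (fun y => Phi mu y - Phi nu y) x
     (Derive H x ^ 3 * (flux H (Phi mu) x - flux H (Phi nu) x))) /\
  (forall x, -1 < x < 0 -> is_derive (fun y => flux H (Phi mu) y - flux H (Phi nu) y) x
     (mu * Derive rho x * (Phi mu x - Phi nu x) + (mu - nu) * Derive rho x * Phi nu x)) /\
  (forall x, -1 <= x <= 0 ->
     continuous (fun y => Phi mu (clamp (-1) 0 y) - Phi nu (clamp (-1) 0 y)) x) /\
  (forall x, -1 <= x <= 0 -> continuous
     (fun y => flux H (Phi mu) (clamp (-1) 0 y) - flux H (Phi nu) (clamp (-1) 0 y)) x).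
Proof.
  intros Hmu Hnu. split; [|split; [|split]].
  - intros x Hx.
    replace (Derive H x ^ 3 * (flux H (Phi mu) x - flux H (Phi nu) x))
      with (Derive H x ^ 3 * flux H (Phi mu) x - Derive H x ^ 3 * flux H (Phi nu) x) by ring.
    apply (is_derive_minus (Phi mu) (Phi nu)); apply Phi_is_derive; auto.
  - intros x Hx.
    replace (mu * Derive rho x * (Phi mu x - Phi nu x) + (mu - nu) * Derive rho x * Phi nu x)
      with (mu * Derive rho x * Phi mu x - nu * Derive rho x * Phi nu x) by ring.
    apply (is_derive_minus (flux H (Phi mu)) (flux H (Phi nu))); apply flux_is_derive; auto.
  - intros x Hx. apply (cont_minus (fun y => Phi mu (clamp (-1) 0 y)));
      apply Phi_clamp_continuous; auto.
  - intros x Hx. apply (cont_minus (fun y => flux H (Phi mu) (clamp (-1) 0 y)));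
      apply flux_clamp_continuous; auto.
Qed.

Lemma Phi_flux_bounded M0 : 0 <= M0 ->
  exists B, forall nu p, 0 <= nu <= M0 -> -1 <= p <= 0 ->
    Rabs (Phi nu p) <= B /\ Rabs (flux H (Phi nu) p) <= B.
Proof.
  intros HM0.
  destruct background_bounds as [BH [Br [HBH0 [HBr0 [HBH HBr]]]]].
  set (K := BH + M0 * Br + 1).
  exists ((/ Derive H (-1) ^ 3) ^ 2 * exp K + 1).
  intros nu p Hnu Hp.
  assert (HE := linear_system_energy (Phi nu) (flux H (Phi nu)) (fun x => Derive H x ^ 3)
    (fun x => nu * Derive rho x) (fun _ => 0) (-1) 0 BH (M0 * Br) 0 ltac:(lra) HBH0
    ltac:(apply Rmult_le_pos; lra) HBH).
  replace (0 - -1) with 1 in HE by ring. rewrite Phi_bottom, flux_bottom, Rmult_1_r in HE by lra.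
  fold K in HE.
  assert (Q : Phi nu p ^ 2 + flux H (Phi nu) p ^ 2 <= (/ Derive H (-1) ^ 3) ^ 2 * exp K).
  { replace ((/ Derive H (-1) ^ 3) ^ 2) with (0 ^ 2 + (/ Derive H (-1) ^ 3) ^ 2 + 0 ^ 2 / K)
      by (unfold Rdiv; ring).
    apply HE; auto.
    - intros x Hx. rewrite Rabs_mult, (Rabs_right nu) by lra.
      apply Rmult_le_compat; try lra; [apply Rabs_pos | apply HBr; auto].
    - intros; rewrite Rabs_R0; lra.
    - intros; apply Phi_is_derive; lra.
    - intros x Hx. rewrite Rplus_0_r. apply flux_is_derive; lra.
    - intros; apply Phi_clamp_continuous; lra.
    - intros; apply flux_clamp_continuous; lra. }
  pose proof (pow2_ge_0 (Phi nu p)). pose proof (pow2_ge_0 (flux H (Phi nu) p)).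
  pose proof (Rabs_le_sq_1 (Phi nu p)). pose proof (Rabs_le_sq_1 (flux H (Phi nu) p)).
  split; lra.
Qed.

Lemma Phi_flux_lipschitz_mu M0 : 0 <= M0 ->
  exists C, forall mu nu p, 0 <= mu <= M0 -> 0 <= nu <= M0 -> -1 <= p <= 0 ->
    Rabs (Phi mu p - Phi nu p) <= C * Rabs (mu - nu) /\
    Rabs (flux H (Phi mu) p - flux H (Phi nu) p) <= C * Rabs (mu - nu).
Proof.
  intros HM0.
  destruct background_bounds as [BH [Br [HBH0 [HBr0 [HBH HBr]]]]].
  destruct (Phi_flux_bounded M0 HM0) as [B HB].
  set (K := BH + M0 * Br + 1).
  assert (HK : 0 < K) by (unfold K; nra).
  set (D := (Br * B) ^ 2 / K * exp K).
  assert (HD : 0 <= D).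
  { unfold D. apply Rmult_le_pos; [apply Rdiv_le_0_compat; [apply pow2_ge_0 | lra]|].
    left; apply exp_pos. }
  exists (sqrt D). intros mu nu p Hmu Hnu Hp.
  destruct (Phi_flux_difference_system mu nu ltac:(lra) ltac:(lra)) as [Hu [Hv [Huc Hvc]]].
  set (u := fun x => Phi mu x - Phi nu x) in *.
  set (v := fun x => flux H (Phi mu) x - flux H (Phi nu) x) in *.
  assert (HE := linear_system_energy u v (fun x => Derive H x ^ 3)
    (fun x => mu * Derive rho x) (fun x => (mu - nu) * Derive rho x * Phi nu x)
    (-1) 0 BH (M0 * Br) (Rabs (mu - nu) * (Br * B)) ltac:(lra) HBH0
    ltac:(apply Rmult_le_pos; lra) HBH).
  replace (0 - -1) with 1 in HE by ring. rewrite Rmult_1_r in HE. fold K in HE.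
  assert (Q : u p ^ 2 + v p ^ 2 <= (sqrt D * Rabs (mu - nu)) ^ 2).
  { replace ((sqrt D * Rabs (mu - nu)) ^ 2)
      with ((u (-1) ^ 2 + v (-1) ^ 2 + (Rabs (mu - nu) * (Br * B)) ^ 2 / K) * exp K).
    2:{ unfold u, v. rewrite !Phi_bottom, !flux_bottom, !Rminus_diag by lra.
        rewrite !Rpow_mult_distr, pow2_abs, pow2_sqrt by auto. unfold D. field. lra. }
    apply HE; auto.
    - intros x Hx. rewrite Rabs_mult, (Rabs_right mu) by lra.
      apply Rmult_le_compat; try lra; [apply Rabs_pos | apply HBr; auto].
    - intros x Hx. rewrite !Rabs_mult, Rmult_assoc.
      apply Rmult_le_compat_l; [apply Rabs_pos|].
      apply Rmult_le_compat; try apply Rabs_pos; [apply HBr | apply (HB nu)]; auto. }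
  assert (0 <= sqrt D * Rabs (mu - nu)) by (apply Rmult_le_pos; [apply sqrt_pos|apply Rabs_pos]).
  pose proof (pow2_ge_0 (u p)). pose proof (pow2_ge_0 (v p)).
  split; apply Rabs_le_of_sq_le; auto; fold (u p) (v p); lra.
Qed.

Lemma A_lipschitz M0 : 0 <= M0 ->
  exists LA, forall mu nu, 0 <= mu <= M0 -> 0 <= nu <= M0 ->
    Rabs (A_fun rho H Phi mu - A_fun rho H Phi nu) <= LA * Rabs (mu - nu).
Proof.
  intros HM0.
  destruct (Phi_flux_lipschitz_mu M0 HM0) as [C HC].
  destruct (Phi_flux_bounded M0 HM0) as [B HB].
  exists (C + Rabs (rho 0) * (M0 * C + B)).
  intros mu nu Hmu Hnu. rewrite !A_fun_flux.
  destruct (HC mu nu 0 Hmu Hnu ltac:(lra)) as [C1 C2].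
  destruct (HB nu 0 Hnu ltac:(lra)) as [B1 _].
  replace (- flux H (Phi mu) 0 + mu * rho 0 * Phi mu 0
           - (- flux H (Phi nu) 0 + nu * rho 0 * Phi nu 0))
    with (- (flux H (Phi mu) 0 - flux H (Phi nu) 0)
          + rho 0 * (mu * (Phi mu 0 - Phi nu 0) + (mu - nu) * Phi nu 0)) by ring.
  eapply Rle_trans; [apply Rabs_triang|]. rewrite Rabs_Ropp, Rabs_mult.
  assert (Q : Rabs (mu * (Phi mu 0 - Phi nu 0) + (mu - nu) * Phi nu 0)
              <= (M0 * C + B) * Rabs (mu - nu)).
  { eapply Rle_trans; [apply Rabs_triang|]. rewrite !Rabs_mult, (Rabs_right mu) by lra.
    pose proof (Rabs_pos (mu - nu)). pose proof (Rabs_pos (Phi nu 0)).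
    pose proof (Rabs_pos (Phi mu 0 - Phi nu 0)).
    assert (mu * Rabs (Phi mu 0 - Phi nu 0) <= M0 * (C * Rabs (mu - nu)))
      by (apply Rmult_le_compat; lra).
    assert (Rabs (mu - nu) * Rabs (Phi nu 0) <= Rabs (mu - nu) * B)
      by (apply Rmult_le_compat_l; lra).
    nra. }
  assert (Rabs (rho 0) * Rabs (mu * (Phi mu 0 - Phi nu 0) + (mu - nu) * Phi nu 0) <=
          Rabs (rho 0) * ((M0 * C + B) * Rabs (mu - nu)))
    by (apply Rmult_le_compat_l; [apply Rabs_pos | auto]).
  nra.
Qed.

Lemma flux_Phi0_const p : -1 <= p <= 0 -> flux H (Phi 0) p = / Derive H (-1) ^ 3.
Proof.
  intros Hp. rewrite <- (flux_bottom 0) by lra.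
  assert (Q : Rabs (flux H (Phi 0) p - flux H (Phi 0) (-1)) <= 0 * Rabs (p - -1)).
  { apply (lipschitz_of_derive_bound _ (fun _ => 0) (-1) 0); auto; try lra.
    - intros x Hx. assert (Q := flux_is_derive 0 x ltac:(lra) Hx).
      rewrite !Rmult_0_l in Q. exact Q.
    - intros; rewrite Rabs_R0; lra.
    - intros; apply flux_clamp_continuous; lra. }
  rewrite Rmult_0_l in Q. pose proof (Rabs_pos (flux H (Phi 0) p - flux H (Phi 0) (-1))).
  apply Rminus_diag_uniq, Rabs_eq_0. lra.
Qed.

Lemma A_0_neg : A_fun rho H Phi 0 < 0.
Proof.
  rewrite A_fun_flux, flux_Phi0_const by lra.
  assert (0 < / Derive H (-1) ^ 3)
    by (apply Rinv_0_lt_compat, pow_lt, (Derive_H_pos _ _ Hbg); lra).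
  lra.
Qed.

Definition positive_above_bottom (f : R -> R) := forall p, -1 < p <= 0 -> 0 < f p.

Lemma Phi0_positive : positive_above_bottom (Phi 0).
Proof.
  intros p Hp. apply (pos_of_derive_pos _ (-1)); try lra.
  - intros; apply Phi_ex_derive; lra.
  - apply Phi_bottom; lra.
  - intros x Hx. rewrite Derive_Phi_eq, flux_Phi0_const by lra.
    apply Rmult_lt_0_compat; apply pow_lt || apply Rinv_0_lt_compat, pow_lt;
      apply (Derive_H_pos _ _ Hbg); lra.
Qed.

Lemma flux_nonincreasing mu : 0 <= mu -> (forall p, -1 <= p <= 0 -> 0 <= Phi mu p) ->
  forall s t, -1 <= s -> s <= t -> t <= 0 -> flux H (Phi mu) t <= flux H (Phi mu) s.
Proof.
  intros Hmu Hnn.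
  apply (nonincreasing_of_derive_nonpos _ (fun p => mu * Derive rho p * Phi mu p)).
  - intros; apply flux_is_derive; auto.
  - intros x Hx. assert (Derive rho x <= 0) by (apply (Derive_rho_nonpos _ _ Hbg); lra).
    assert (0 <= Phi mu x) by (apply Hnn; lra).
    assert (0 <= mu * (- Derive rho x) * Phi mu x) by (repeat apply Rmult_le_pos; lra).
    lra.
  - intros; apply flux_clamp_continuous; auto.
Qed.

(* If [flux t >= 0], monotonicity of the flux makes [Phi] nondecreasing on
   [[-1, t]], hence identically [0] there, against [Phi_p (-1) = 1]. *)
Lemma flux_neg_at_zero_of_Phi mu t : 0 <= mu -> (forall p, -1 <= p <= 0 -> 0 <= Phi mu p) ->
  -1 < t <= 0 -> Phi mu t = 0 -> flux H (Phi mu) t < 0.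
Proof.
  intros Hmu Hnn Ht Hz.
  destruct (Rlt_le_dec (flux H (Phi mu) t) 0) as [|Hft]; auto. exfalso.
  assert (Hd : forall s, -1 < s < t -> 0 <= Derive (Phi mu) s).
  { intros s Hs. rewrite Derive_Phi_eq by lra.
    apply Rmult_le_pos; [apply pow_le; left; apply (Derive_H_pos _ _ Hbg); lra|].
    apply Rle_trans with (flux H (Phi mu) t); auto. apply flux_nonincreasing; auto; lra. }
  assert (Hzero : forall s, -1 <= s <= t -> Phi mu s = 0).
  { intros s Hs. assert (- Phi mu t <= - Phi mu s).
    { apply (nonincreasing_of_derive_nonpos (fun y => - Phi mu y)
               (fun y => - Derive (Phi mu) y) (-1) t); try lra.
      - intros x Hx. apply (is_derive_opp (Phi mu)), Derive_correct, Phi_ex_derive; auto.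
      - intros x Hx. specialize (Hd x Hx). lra.
      - intros x Hx. apply (continuous_clamp_comp (-1) t x (fun y => - Phi mu y)); auto.
        apply cont_opp, continuous_Phi; auto. }
    specialize (Hnn s ltac:(lra)). lra. }
  assert (Hd0 : forall y, -1 < y < t -> Derive (Phi mu) (clamp (-1) 0 y) = 0).
  { intros y Hy. rewrite clamp_id by lra. apply is_derive_unique.
    apply (is_derive_ext_loc (fun _ => 0)); [|auto_derive; auto].
    eapply filter_imp; [|apply (locally_open_interval (-1) t y Hy)].
    intros z Hz'. rewrite Hzero; lra. }
  assert (Q := continuous_eq_of_interior _ (-1) t (-1) 0 ltac:(lra) ltac:(lra)
                 (Derive_Phi_clamp_continuous mu (-1) Hmu) Hd0).
  cbv beta in Q. rewrite clamp_id, Derive_Phi_bottom in Q by lra. lra.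
Qed.

Lemma Phi_positive_or_A_pos mu : 0 <= mu -> (forall p, -1 <= p <= 0 -> 0 <= Phi mu p) ->
  positive_above_bottom (Phi mu) \/ 0 < A_fun rho H Phi mu.
Proof.
  intros Hmu Hnn.
  assert (Hint : forall t, -1 < t < 0 -> 0 < Phi mu t).
  { intros t Ht. destruct (Rle_lt_dec (Phi mu t) 0) as [Hle|]; auto. exfalso.
    assert (Hz : Phi mu t = 0) by (specialize (Hnn t ltac:(lra)); lra).
    assert (HD : Derive (Phi mu) t = 0).
    { rewrite <- (Derive_Reals (Phi mu) t (ex_derive_Reals_0 _ _ (Phi_ex_derive mu t Hmu))).
      apply (deriv_minimum (Phi mu) (-1) 0 t); try lra.
      intros x Hx1 Hx2. rewrite Hz. apply Hnn; lra. }
    assert (Q := flux_neg_at_zero_of_Phi mu t Hmu Hnn ltac:(lra) Hz).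
    unfold flux in Q. rewrite HD in Q. unfold Rdiv in Q. lra. }
  destruct (Rlt_le_dec 0 (Phi mu 0)) as [Hp0|Hle0].
  - left. intros p Hp. destruct (Req_dec p 0) as [->|]; auto. apply Hint; lra.
  - right. assert (Hz : Phi mu 0 = 0) by (specialize (Hnn 0 ltac:(lra)); lra).
    assert (Q := flux_neg_at_zero_of_Phi mu 0 Hmu Hnn ltac:(lra) Hz).
    rewrite A_fun_flux, Hz. lra.
Qed.

Lemma Derive_Phi_near_bottom s : 0 <= s ->
  exists eta, 0 < eta <= 1 / 2 /\ forall y, -1 <= y <= -1 + eta -> 1 / 2 < Derive (Phi s) y.
Proof.
  intros Hs.
  destruct (proj1 (filterlim_locally _ _) (Derive_Phi_clamp_continuous s (-1) Hs)
              (mkposreal (1 / 2) ltac:(lra))) as [e He].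
  assert (0 < e) by apply cond_pos.
  exists (Rmin (e / 2) (1 / 2)).
  assert (Rmin (e / 2) (1 / 2) <= e / 2) by apply Rmin_l.
  assert (Rmin (e / 2) (1 / 2) <= 1 / 2) by apply Rmin_r.
  split; [split; auto; apply Rmin_pos; lra|].
  intros y Hy. assert (Hb : ball (-1) e y) by (apply ball_Rabs, Rabs_def1; lra).
  assert (Q : Rabs (Derive (Phi s) (clamp (-1) 0 y) - Derive (Phi s) (clamp (-1) 0 (-1)))
              < 1 / 2) by exact (He y Hb).
  rewrite !clamp_id, Derive_Phi_bottom in Q by lra. apply Rabs_lt_between in Q. lra.
Qed.

Lemma Phi_positive_near_bottom mu s eta : 0 <= mu -> 0 <= s -> eta <= 1 ->
  (forall y, -1 <= y <= -1 + eta -> 1 / 2 < Derive (Phi s) y) ->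
  (forall x, -1 <= x <= -1 + eta ->
     Rabs (Derive H x ^ 3 * (flux H (Phi mu) x - flux H (Phi s) x)) <= 1 / 4) ->
  forall p, -1 < p <= -1 + eta -> 0 < Phi mu p.
Proof.
  intros Hmu Hs Heta Hd1 Hclose p Hp.
  apply (pos_of_derive_pos _ (-1)); try lra.
  - intros; apply Phi_ex_derive; lra.
  - apply Phi_bottom; lra.
  - intros x Hx. rewrite Derive_Phi_eq by lra.
    assert (Hs1 := Hd1 x ltac:(lra)). rewrite Derive_Phi_eq in Hs1 by lra.
    assert (Q := Hclose x ltac:(lra)). apply Rabs_le_between in Q.
    replace (Derive H x ^ 3 * flux H (Phi mu) x) with (Derive H x ^ 3 * flux H (Phi s) x
      + Derive H x ^ 3 * (flux H (Phi mu) x - flux H (Phi s) x)) by ring.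
    lra.
Qed.

(* Away from the bottom positivity persists by continuity in [mu]; near the
   bottom [Phi_p] stays close to [Phi_p(-1) = 1]. *)
Lemma Phi_positive_nearby M0 s : 0 <= s <= M0 -> positive_above_bottom (Phi s) ->
  exists delta, 0 < delta /\ forall mu, 0 <= mu <= M0 -> Rabs (mu - s) < delta ->
    positive_above_bottom (Phi mu).
Proof.
  intros Hs HT.
  destruct (Phi_flux_lipschitz_mu M0 ltac:(lra)) as [C HC].
  destruct background_bounds as [BH [Br [HBH0 [HBr0 [HBH HBr]]]]].
  destruct (Derive_Phi_near_bottom s ltac:(lra)) as [eta [Heta Hd1]].
  destruct (continuous_pos_lower_bound (Phi s) (-1 + eta) 0) as [m [Hm Hmin]]; try lra.
  { intros; apply continuous_Phi; lra. }
  { intros x Hx. apply HT. lra. }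
  set (Ca := Rabs C + 1).
  assert (HCa : 0 < Ca) by (unfold Ca; pose proof (Rabs_pos C); lra).
  assert (HCle : C <= Ca) by (unfold Ca; pose proof (Rle_abs C); lra).
  set (delta := Rmin (m / (2 * Ca)) (1 / (4 * ((BH + 1) * Ca)))).
  assert (Hdel1 : delta <= m / (2 * Ca)) by apply Rmin_l.
  assert (Hdel2 : delta <= 1 / (4 * ((BH + 1) * Ca))) by apply Rmin_r.
  assert (Hdel : 0 < delta) by (apply Rmin_pos; apply Rdiv_lt_0_compat; try lra; nra).
  exists delta. split; auto.
  intros mu Hmu Hdm p Hp.
  assert (Hcm : forall x, -1 <= x <= 0 ->
            Rabs (Phi mu x - Phi s x) <= Ca * delta /\
            Rabs (flux H (Phi mu) x - flux H (Phi s) x) <= Ca * delta).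
  { intros x Hx. destruct (HC mu s x Hmu Hs Hx) as [Q1 Q2].
    pose proof (Rabs_pos (mu - s)).
    assert (C * Rabs (mu - s) <= Ca * delta)
      by (destruct (Rle_lt_dec 0 C); [apply Rmult_le_compat|]; nra).
    split; lra. }
  destruct (Rle_lt_dec (-1 + eta) p) as [Hpe|Hpe].
  - destruct (Hcm p ltac:(lra)) as [Q _]. apply Rabs_le_between in Q.
    specialize (Hmin p ltac:(lra)).
    assert (Ca * delta <= m / 2).
    { apply Rle_trans with (Ca * (m / (2 * Ca))); [apply Rmult_le_compat_l; lra|].
      right; field; lra. }
    lra.
  - apply (Phi_positive_near_bottom mu s eta); try exact Hd1; try lra.
    intros x Hx. destruct (Hcm x ltac:(lra)) as [_ Q].
    assert (HB := HBH x ltac:(lra)).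
    apply Rle_trans with ((BH + 1) * (Ca * delta)).
    { rewrite Rabs_mult. apply Rmult_le_compat; try apply Rabs_pos; lra. }
    apply Rle_trans with ((BH + 1) * Ca * (1 / (4 * ((BH + 1) * Ca)))).
    + rewrite Rmult_assoc. apply Rmult_le_compat_l; [lra | apply Rmult_le_compat_l; lra].
    + right. field. split; lra.
Qed.

Lemma Phi_nonneg_of_positive_below s : 0 < s ->
  (forall y, 0 <= y < s -> positive_above_bottom (Phi y)) ->
  forall p, -1 <= p <= 0 -> 0 <= Phi s p.
Proof.
  intros Hs Hbelow p Hp.
  destruct (Phi_flux_lipschitz_mu s ltac:(lra)) as [C HC].
  apply Rle_plus_epsilon. intros eps Heps.
  set (Ca := Rabs C + 1).
  assert (HCa : 0 < Ca) by (unfold Ca; pose proof (Rabs_pos C); lra).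
  set (y := Rmax 0 (s - eps / Ca)).
  assert (Hy1 : 0 <= y) by apply Rmax_l.
  assert (Hy3 : s - eps / Ca <= y) by apply Rmax_r.
  assert (Hy2 : y < s).
  { assert (0 < eps / Ca) by (apply Rdiv_lt_0_compat; lra).
    unfold y, Rmax. destruct Rle_dec; lra. }
  assert (Hpy : 0 <= Phi y p).
  { destruct (Req_dec p (-1)) as [->|]; [rewrite Phi_bottom; lra|].
    left. apply (Hbelow y); lra. }
  destruct (HC s y p ltac:(lra) ltac:(lra) Hp) as [Q _]. apply Rabs_le_between in Q.
  assert (C * Rabs (s - y) <= eps).
  { rewrite Rabs_right by lra.
    apply Rle_trans with (Ca * (s - y)).
    - apply Rmult_le_compat_r; [lra | unfold Ca; pose proof (Rle_abs C); lra].
    - apply Rle_trans with (Ca * (eps / Ca)); [apply Rmult_le_compat_l; lra|].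
      right; field; lra. }
  lra.
Qed.

Lemma A_zero_of_pos s : 0 < s -> 0 < A_fun rho H Phi s ->
  exists z, 0 < z < s /\ A_fun rho H Phi z = 0.
Proof.
  intros Hs HAs.
  destruct (A_lipschitz s ltac:(lra)) as [LA HLA].
  assert (HA0 := A_0_neg).
  destruct (IVT (fun y => A_fun rho H Phi (clamp 0 s y)) 0 s) as [z [Hz Hz2]];
    rewrite ?clamp_id; try lra.
  - intros x. apply continuity_pt_of_continuous.
    apply (continuous_clamp_of_lipschitz (A_fun rho H Phi) 0 s LA); [lra|].
    intros; apply HLA; auto.
  - rewrite clamp_id in Hz2 by lra. exists z. split; auto.
    destruct (Req_dec z 0) as [->|]; [lra|].
    destruct (Req_dec z s) as [->|]; [lra|]. lra.
Qed.

(* [s] is the supremum of the [x <= mu_cr] such that [Phi y > 0] for all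
   [y <= x]: positivity at [s] follows from its limit [Phi s >= 0] since [A]
   has no zero in [(0, mu_cr)], and [s < mu_cr] would contradict openness. *)
Lemma Phi_positive_mu_cr mc : is_mu_cr rho H Phi mc -> positive_above_bottom (Phi mc).
Proof.
  intros [Hmc [HA Hmin]].
  set (S := fun x => 0 <= x <= mc /\ forall y, 0 <= y <= x -> positive_above_bottom (Phi y)).
  assert (HS0 : S 0).
  { split; [lra|]. intros y Hy. replace y with 0 by lra. apply Phi0_positive. }
  destruct (completeness S) as [s [Hub Hlub]].
  { exists mc. intros x [Hx _]. lra. }
  { exists 0. exact HS0. }
  assert (Hs0 : 0 <= s) by (apply Hub, HS0).
  assert (Hsm : s <= mc) by (apply Hlub; intros x [Hx _]; lra).
  assert (Hbelow : forall y, 0 <= y < s -> positive_above_bottom (Phi y)).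
  { intros y Hy. apply NNPP. intros Hn.
    assert (s <= y); [|lra].
    apply Hlub. intros x [Hx Hx2]. destruct (Rle_lt_dec x y) as [|Hlt]; auto.
    exfalso. apply Hn, Hx2. lra. }
  assert (HTs : positive_above_bottom (Phi s)).
  { destruct (Req_dec s 0) as [->|Hs]; [apply Phi0_positive|].
    destruct (Phi_positive_or_A_pos s Hs0) as [|HAs]; auto.
    - apply Phi_nonneg_of_positive_below; auto; lra.
    - exfalso. destruct (A_zero_of_pos s ltac:(lra) HAs) as [z [Hz Hz0]].
      apply (Hmin z); auto. lra. }
  destruct (Req_dec s mc) as [<-|Hne]; auto. exfalso.
  destruct (Phi_positive_nearby mc s ltac:(lra) HTs) as [del [Hdel Hdel2]].
  set (s' := Rmin (s + del / 2) mc).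
  assert (s' <= s + del / 2) by apply Rmin_l. assert (s' <= mc) by apply Rmin_r.
  assert (s < s') by (unfold s', Rmin; destruct Rle_dec; lra).
  assert (HSs : S s').
  { split; [lra|]. intros y Hy. destruct (Rlt_le_dec y s); [apply Hbelow; lra|].
    apply Hdel2; [lra | apply Rabs_def1; lra]. }
  specialize (Hub s' HSs). lra.
Qed.

(* With [A = 0] the flux at the top equals [mu rho(0) Phi(0) > 0], and the flux is
   nonincreasing. *)
Lemma Derive_Phi_pos_of_A_zero mu : 0 < mu -> A_fun rho H Phi mu = 0 ->
  positive_above_bottom (Phi mu) -> forall p, -1 <= p <= 0 -> 0 < Derive (Phi mu) p.
Proof.
  intros Hmu HA HT.
  assert (Hnn : forall p, -1 <= p <= 0 -> 0 <= Phi mu p).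
  { intros p Hp. destruct (Req_dec p (-1)) as [->|]; [rewrite Phi_bottom; lra|].
    left; apply HT; lra. }
  assert (Hflux0 : 0 < flux H (Phi mu) 0).
  { rewrite A_fun_flux in HA.
    assert (0 < mu * rho 0 * Phi mu 0); [|lra].
    apply Rmult_lt_0_compat; [apply Rmult_lt_0_compat|]; auto.
    - apply (rho_pos _ _ Hbg); lra.
    - apply HT; lra. }
  intros p Hp. rewrite Derive_Phi_eq by auto. apply Rmult_lt_0_compat.
  - apply pow_lt, (Derive_H_pos _ _ Hbg); auto.
  - assert (flux H (Phi mu) 0 <= flux H (Phi mu) p) by (apply flux_nonincreasing; auto; lra).
    lra.
Qed.

Lemma Derive_Phi_pos_of_Derive_nonneg mu : 0 < mu -> A_fun rho H Phi mu = 0 ->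
  (forall p, -1 <= p <= 0 -> 0 <= Derive (Phi mu) p) ->
  forall p, -1 <= p <= 0 -> 0 < Derive (Phi mu) p.
Proof.
  intros Hmu HA Hd.
  assert (Hnn : forall p, -1 <= p <= 0 -> 0 <= Phi mu p).
  { intros p Hp. rewrite <- (Phi_bottom mu) by lra.
    assert (- Phi mu p <= - Phi mu (-1)); [|lra].
    apply (nonincreasing_of_derive_nonpos (fun y => - Phi mu y)
             (fun y => - Derive (Phi mu) y) (-1) 0); try lra.
    - intros x Hx. apply (is_derive_opp (Phi mu)), Derive_correct, Phi_ex_derive; lra.
    - intros x Hx. specialize (Hd x ltac:(lra)). lra.
    - intros x Hx. apply (continuous_clamp_comp (-1) 0 x (fun y => - Phi mu y)); auto.
      apply cont_opp, continuous_Phi; lra. }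
  apply Derive_Phi_pos_of_A_zero; auto.
  destruct (Phi_positive_or_A_pos mu ltac:(lra) Hnn) as [|HAp]; auto. lra.
Qed.

Lemma Derive_Phi_mu_cr_pos mc : is_mu_cr rho H Phi mc ->
  forall p, -1 <= p <= 0 -> 0 < Derive (Phi mc) p.
Proof.
  intros Hcr. apply Derive_Phi_pos_of_A_zero; [apply Hcr | apply Hcr |].
  apply Phi_positive_mu_cr; auto.
Qed.

(** * The height equation *)

Record strip_regular (w : R -> R -> R) : Prop := {
  ex_derive_pd : forall l q p, (length l < 3)%nat ->
    ex_derive (fun q' => pd l w q' p) q /\ ex_derive (fun p' => pd l w q p') p;
  continuous_pd : forall l q p, (length l <= 3)%nat -> in_Rbar q p ->
    continuous (fun z : R * R => pd l w (fst z) (snd z)) (q, p);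
  pd_vanishing : forall l, (length l <= 2)%nat -> forall eps, 0 < eps -> exists M,
    forall q p, M <= Rabs q -> in_Rbar q p -> Rabs (pd l w q p) < eps;
  w_bottom : forall q, w q (-1) = 0 }.

Lemma strip_regular_of_in_X alpha w : in_X alpha w -> strip_regular w.
Proof. intros [[C1 [C2 _]] [_ [Hdec HB]]]. constructor; auto. Qed.

Lemma continuity_2d_pt_of_continuous (f : R -> R -> R) q p :
  continuous (fun z : R * R => f (fst z) (snd z)) (q, p) -> continuity_2d_pt f q p.
Proof. apply continuity_2d_pt_filterlim. Qed.

Lemma continuous_of_continuity_2d_pt (f : R -> R -> R) q p :
  continuity_2d_pt f q p -> continuous (fun v => f q v) p.
Proof.
  intros Hc. apply continuity_2d_pt_filterlim in Hc.
  apply (continuous_comp_2 (fun _ : R => q) (fun v : R => v) f);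
    [apply continuous_const | apply continuous_id | exact Hc].
Qed.

Lemma continuity_2d_pt_of_continuous_p (f : R -> R) q p :
  continuous f p -> continuity_2d_pt (fun _ v => f v) q p.
Proof.
  intros Hc. apply (continuity_1d_2d_pt_comp f (fun _ v => v)).
  - apply continuity_pt_of_continuous; auto.
  - apply continuity_2d_pt_id2.
Qed.

Section HeightEquation.

Variables (w : R -> R -> R) (F : R).
Hypothesis Hw : strip_regular w.
Hypothesis HH0 : H 0 = 1.
Hypothesis Heq : height_eq rho H w F.

Definition hq q p := pd (true :: nil) w q p.
Definition hp q p := Derive H p + pd (false :: nil) w q p.
Definition Dq_ratio u v := Derive (fun z => hq z v / hp z v) u.
Definition ratio_integral (f : R -> R) q := RInt (fun t => f t * (hq q t / hp q t)) (-1) 0.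

(* The term differentiated in [p] in the height equation; [(1 + h_q^2) / (2 h_p^2)]
   is half the squared velocity. *)
Definition bernoulli q t := - (1 + hq q t ^ 2) / (2 * hp q t ^ 2) + 1 / (2 * Derive H t ^ 2).
Definition bernoulli_defect q t := - bernoulli q t + pd (false :: nil) w q t / Derive H t ^ 3.

(* Convexity of [x |-> 1 / (2 x^2)]: the defect minus [h_q^2 / (2 h_p^2)] equals
   [(h_p - H_p)^2 (2 h_p + H_p) / (2 h_p^2 H_p^3)]. *)
Lemma bernoulli_defect_ge q t : 0 < hp q t -> 0 < Derive H t ->
  hq q t ^ 2 / (2 * hp q t ^ 2) <= bernoulli_defect q t.
Proof.
  intros Hx Hy. unfold bernoulli_defect, bernoulli.
  replace (pd (false :: nil) w q t) with (hp q t - Derive H t) by (unfold hp; ring).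
  set (x := hp q t) in *. set (y := Derive H t) in *. set (s := hq q t).
  assert (E : - (- (1 + s ^ 2) / (2 * x ^ 2) + 1 / (2 * y ^ 2)) + (x - y) / y ^ 3
              - s ^ 2 / (2 * x ^ 2) = (x - y) ^ 2 * (2 * x + y) / (2 * x ^ 2 * y ^ 3))
    by (field; lra).
  assert (0 <= (x - y) ^ 2 * (2 * x + y) / (2 * x ^ 2 * y ^ 3)).
  { apply Rdiv_le_0_compat; [apply Rmult_le_pos; [apply pow2_ge_0 | lra]|].
    repeat apply Rmult_lt_0_compat; try apply pow_lt; lra. }
  lra.
Qed.

Lemma bernoulli_defect_nonneg q t : 0 < hp q t -> 0 < Derive H t ->
  0 <= bernoulli_defect q t.
Proof.
  intros. eapply Rle_trans; [|apply bernoulli_defect_ge; auto].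
  apply Rdiv_le_0_compat; [apply pow2_ge_0|]. apply Rmult_lt_0_compat; [lra | apply pow_lt; lra].
Qed.

Lemma ex_derive_q_pd l q p : (length l < 3)%nat -> ex_derive (fun q' => pd l w q' p) q.
Proof. intros Hl. apply (ex_derive_pd _ Hw l q p Hl). Qed.

Lemma ex_derive_p_pd l q p : (length l < 3)%nat -> ex_derive (fun p' => pd l w q p') p.
Proof. intros Hl. apply (ex_derive_pd _ Hw l q p Hl). Qed.

Lemma pd_continuity_2d l q p : (length l <= 3)%nat -> -1 <= p <= 0 ->
  continuity_2d_pt (pd l w) q p.
Proof. intros Hl Hp. apply continuity_2d_pt_of_continuous, (continuous_pd _ Hw); auto. Qed.

Lemma pd_continuous_p l q p : (length l <= 3)%nat -> -1 <= p <= 0 ->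
  continuous (fun v => pd l w q v) p.
Proof. intros. apply continuous_of_continuity_2d_pt, pd_continuity_2d; auto. Qed.

Lemma hp_continuity_2d q p : -1 <= p <= 0 -> continuity_2d_pt hp q p.
Proof.
  intros Hp. apply continuity_2d_pt_plus.
  - apply continuity_2d_pt_of_continuous_p, continuous_Derive_H; auto.
  - apply pd_continuity_2d; auto.
Qed.

Lemma hp_continuous_p q p : -1 <= p <= 0 -> continuous (fun v => hp q v) p.
Proof. intros. apply continuous_of_continuity_2d_pt, hp_continuity_2d; auto. Qed.

Lemma dq_height q p : dq (fun q p => H p + w q p) q p = hq q p.
Proof.
  unfold hq. simpl pd. unfold dq. apply is_derive_unique.
  rewrite <- (Rplus_0_l (Derive (fun q' => w q' p) q)).
  apply (is_derive_plus (fun _ => H p) (fun q' => w q' p)); [auto_derive; auto|].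
  apply Derive_correct, (ex_derive_q_pd nil); simpl; lia.
Qed.

Lemma dp_height q p : dp (fun q p => H p + w q p) q p = hp q p.
Proof.
  unfold hp. simpl pd. unfold dp. apply is_derive_unique.
  apply (is_derive_plus H (fun p' => w q p')); apply Derive_correct.
  - apply (H_ex_derive _ _ Hbg).
  - apply (ex_derive_p_pd nil); simpl; lia.
Qed.

Lemma hp_lower_bound : exists delta, 0 < delta /\
  forall q p, -1 <= p <= 0 -> delta <= hp q p.
Proof.
  destruct Heq as [_ [_ [_ [_ [delta [Hdel Hd]]]]]].
  exists delta. split; auto. intros q p Hp.
  apply (continuous_ge_of_interior (fun v => hp q v) (-1) 0 p delta); try lra.
  - apply hp_continuous_p; auto.
  - intros y Hy. apply Hd. unfold in_R. lra.
Qed.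

Lemma hp_pos q p : -1 <= p <= 0 -> 0 < hp q p.
Proof.
  intros Hp. destruct hp_lower_bound as [delta [Hdel Hlb]]. specialize (Hlb q p Hp). lra.
Qed.

Lemma hq_is_derive_q u v : is_derive (fun z => hq z v) u (pd (true :: true :: nil) w u v).
Proof. apply Derive_correct, (ex_derive_q_pd (true :: nil)); simpl; lia. Qed.

Lemma hp_is_derive_q u v :
  is_derive (fun z => hp z v) u (pd (true :: false :: nil) w u v).
Proof.
  unfold hp. rewrite <- (Rplus_0_l (pd (true :: false :: nil) w u v)).
  apply (is_derive_plus (fun _ => Derive H v) (fun z => pd (false :: nil) w z v));
    [auto_derive; auto|].
  apply Derive_correct, (ex_derive_q_pd (false :: nil)); simpl; lia.
Qed.

Lemma Dq_ratio_formula u v : hp u v <> 0 ->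
  Dq_ratio u v = (pd (true :: true :: nil) w u v * hp u v
                  - hq u v * pd (true :: false :: nil) w u v) / hp u v ^ 2.
Proof.
  intros Hn. apply is_derive_unique.
  apply (is_derive_div (fun z => hq z v) (fun z => hp z v));
    [apply hq_is_derive_q | apply hp_is_derive_q | auto].
Qed.

Lemma Dq_ratio_continuity_2d q t : -1 <= t <= 0 -> continuity_2d_pt Dq_ratio q t.
Proof.
  intros Ht.
  assert (Hc := hp_continuity_2d q t Ht).
  assert (Hn : hp q t <> 0) by (pose proof (hp_pos q t Ht); lra).
  apply continuity_2d_pt_ext_loc with
    (f := fun u v => (pd (true :: true :: nil) w u v * hp u v
          - hq u v * pd (true :: false :: nil) w u v) * / (hp u v * (hp u v * 1))).
  { destruct (continuity_2d_pt_neq_0 _ _ _ Hc Hn) as [e He].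
    exists e. intros u v Hu Hv. rewrite Dq_ratio_formula; auto. }
  apply continuity_2d_pt_mult.
  - apply continuity_2d_pt_minus; apply continuity_2d_pt_mult; auto;
      unfold hq; apply pd_continuity_2d; simpl; auto; lia.
  - apply continuity_2d_pt_inv; [|rewrite Rmult_1_r; apply Rmult_integral_contrapositive; auto].
    repeat apply continuity_2d_pt_mult; auto. apply continuity_2d_pt_const.
Qed.

Lemma ratio_continuous_p q t : -1 <= t <= 0 ->
  continuous (fun v => hq q v / hp q v) t.
Proof.
  intros Ht. apply cont_div.
  - apply (pd_continuous_p (true :: nil)); simpl; auto; lia.
  - apply hp_continuous_p; auto.
  - pose proof (hp_pos q t Ht). lra.
Qed.

Lemma ratio_integral_is_derive (f : R -> R) q : (forall x, ex_derive f x) ->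
  is_derive (ratio_integral f) q (RInt (fun t => f t * Dq_ratio q t) (-1) 0).
Proof.
  intros Hf.
  assert (Hmm : forall t, Rmin (-1) 0 <= t <= Rmax (-1) 0 -> -1 <= t <= 0)
    by (intros t; rewrite Rmin_left, Rmax_right; lra).
  rewrite <- (RInt_ext (fun t => Derive (fun u => f t * (hq u t / hp u t)) q)).
  2:{ intros t Ht. rewrite Derive_scal. reflexivity. }
  apply (is_derive_RInt_param (fun u t => f t * (hq u t / hp u t))).
  - apply filter_forall. intros x0 t Ht. apply Hmm in Ht.
    apply ex_derive_scal, ex_derive_div.
    + eexists; apply hq_is_derive_q.
    + eexists; apply hp_is_derive_q.
    + pose proof (hp_pos x0 t Ht). lra.
  - intros t Ht. apply Hmm in Ht.
    apply continuity_2d_pt_ext with (f := fun u v => f v * Dq_ratio u v).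
    { intros u v. rewrite Derive_scal. reflexivity. }
    apply continuity_2d_pt_mult.
    + apply continuity_2d_pt_of_continuous_p, continuous_of_ex_derive; auto.
    + apply Dq_ratio_continuity_2d; auto.
  - apply filter_forall. intros y. apply (@ex_RInt_continuous R_CompleteNormedModule).
    intros z Hz. apply Hmm in Hz.
    apply cont_mult; [apply continuous_of_ex_derive; auto | apply ratio_continuous_p; auto].
Qed.

Lemma ratio_integral_vanishing (f : R -> R) : (forall x, ex_derive f x) ->
  forall eps, 0 < eps -> exists M, forall q, M <= Rabs q ->
    Rabs (ratio_integral f q) <= eps.
Proof.
  intros Hf eps Heps.
  destruct hp_lower_bound as [delta [Hdel Hlb]].
  destruct (continuous_bounded f (-1) 0) as [B [HB0 HB]];
    [lra | intros; apply continuous_of_ex_derive; auto |].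
  set (eta := eps * delta / (B + 1)).
  assert (Heta : 0 < eta) by (unfold eta; apply Rdiv_lt_0_compat; [nra|lra]).
  destruct ((pd_vanishing _ Hw) (true :: nil) ltac:(simpl; lia) eta Heta) as [M HM].
  exists M. intros q Hq. unfold ratio_integral.
  replace eps with ((0 - -1) * eps) by ring.
  apply abs_RInt_le_const; [lra| |].
  - apply (@ex_RInt_continuous R_CompleteNormedModule).
    intros z Hz. rewrite Rmin_left, Rmax_right in Hz by lra.
    apply cont_mult; [apply continuous_of_ex_derive; auto | apply ratio_continuous_p; auto].
  - intros t Ht. rewrite Rabs_mult. unfold Rdiv. rewrite Rabs_mult.
    assert (Hl := Hlb q t Ht).
    rewrite Rabs_inv, (Rabs_right (hp q t)) by lra.
    assert (A1 := HB t Ht).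
    assert (A2 : Rabs (hq q t) < eta) by (apply HM; auto; unfold in_Rbar; lra).
    assert (A3 : / hp q t <= / delta) by (apply Rinv_le_contravar; lra).
    assert (0 < / hp q t) by (apply Rinv_0_lt_compat; lra).
    apply Rle_trans with (B * (eta * / delta)).
    { pose proof (Rabs_pos (hq q t)). pose proof (Rabs_pos (f t)).
      apply Rmult_le_compat; auto; [apply Rmult_le_pos; lra | apply Rmult_le_compat; lra]. }
    apply Rle_trans with (eps * (B / (B + 1))); [right; unfold eta; field; lra|].
    assert (B / (B + 1) <= 1)
      by (apply Rmult_le_reg_r with (B + 1); [lra | field_simplify; lra]).
    nra.
Qed.

Local Notation mu := (/ F ^ 2).

Lemma mu_pos : 0 < mu.
Proof. destruct Heq as [HF _]. apply Rinv_0_lt_compat, pow_lt; lra. Qed.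

Lemma bernoulli_ex_derive q t : -1 <= t <= 0 -> ex_derive (fun v => bernoulli q v) t.
Proof.
  intros Ht. unfold bernoulli.
  assert (Hn : hp q t <> 0) by (pose proof (hp_pos q t Ht); lra).
  assert (HH : Derive H t <> 0) by (apply Derive_H_neq_0; auto).
  assert (E1 : ex_derive (fun v => hq q v) t)
    by (apply (ex_derive_p_pd (true :: nil)); simpl; lia).
  assert (E2 : ex_derive (fun v => hp q v) t).
  { apply (ex_derive_plus (Derive H) (fun v => pd (false :: nil) w q v)).
    - apply (Derive_H_ex_derive _ _ Hbg).
    - apply (ex_derive_p_pd (false :: nil)); simpl; lia. }
  apply (ex_derive_plus (fun v => - (1 + hq q v ^ 2) / (2 * hp q v ^ 2))
                        (fun v => 1 / (2 * Derive H v ^ 2))).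
  - apply (ex_derive_div (fun v => - (1 + hq q v ^ 2)) (fun v => 2 * hp q v ^ 2)).
    + apply (ex_derive_opp (fun v => 1 + hq q v ^ 2)).
      apply (ex_derive_plus (fun _ => 1) (fun v => hq q v ^ 2));
        [apply ex_derive_const | apply ex_derive_pow; auto].
    + apply ex_derive_scal, ex_derive_pow; auto.
    + apply Rmult_integral_contrapositive_currified; [lra | apply pow_nonzero; auto].
  - apply (ex_derive_div (fun _ => 1) (fun v => 2 * Derive H v ^ 2)).
    + apply ex_derive_const.
    + apply ex_derive_scal, ex_derive_pow, (Derive_H_ex_derive _ _ Hbg).
    + apply Rmult_integral_contrapositive_currified; [lra | apply pow_nonzero; auto].
Qed.

Lemma bernoulli_continuous q t : -1 <= t <= 0 -> continuous (fun v => bernoulli q v) t.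
Proof.
  intros Ht. unfold bernoulli.
  assert (Hn : hp q t <> 0) by (pose proof (hp_pos q t Ht); lra).
  assert (HH : Derive H t <> 0) by (apply Derive_H_neq_0; auto).
  apply cont_plus; apply cont_div.
  - apply cont_opp, cont_plus; [apply continuous_const|].
    apply cont_pow, (pd_continuous_p (true :: nil)); simpl; auto; lia.
  - apply cont_mult; [apply continuous_const | apply cont_pow, hp_continuous_p; auto].
  - apply Rmult_integral_contrapositive_currified; [lra | apply pow_nonzero; auto].
  - apply continuous_const.
  - apply cont_mult; [apply continuous_const | apply cont_pow, continuous_Derive_H].
  - apply Rmult_integral_contrapositive_currified; [lra | apply pow_nonzero; auto].
Qed.

Lemma bernoulli_is_derive q p : -1 < p < 0 ->
  is_derive (fun v => bernoulli q v) p (mu * Derive rho p * w q p - Dq_ratio q p).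
Proof.
  intros Hp. destruct Heq as [_ [HPDE _]]. cbv zeta in HPDE.
  specialize (HPDE q p ltac:(unfold in_R; lra)).
  rewrite (Derive_ext (fun p' => _ + 1 / _) (fun v => bernoulli q v)) in HPDE
    by (intros t; unfold bernoulli; rewrite dq_height, dp_height; ring).
  rewrite (Derive_ext (fun q' => _ / _) (fun z => hq z p / hp z p)) in HPDE
    by (intros z; rewrite dq_height, dp_height; ring).
  fold (Dq_ratio q p) in HPDE.
  replace (H p + w q p - H p) with (w q p) in HPDE by ring.
  replace (mu * Derive rho p * w q p - Dq_ratio q p)
    with (Derive (fun v => bernoulli q v) p) by lra.
  apply Derive_correct, bernoulli_ex_derive; lra.
Qed.

Lemma bernoulli_top q : bernoulli q 0 = mu * rho 0 * w q 0.
Proof.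
  destruct Heq as [_ [_ [HBC _]]]. cbv zeta in HBC. specialize (HBC q).
  rewrite dq_height, dp_height, HH0 in HBC. unfold bernoulli. unfold Rdiv in *. lra.
Qed.

Lemma w_continuous_p q t : -1 <= t <= 0 -> continuous (fun v => w q v) t.
Proof. intros. apply (pd_continuous_p nil); simpl; auto; lia. Qed.

Lemma defect_integrand_clamp_continuous q x : -1 <= x <= 0 ->
  continuous (fun y => Derive (Phi mu) (clamp (-1) 0 y)
                       * bernoulli_defect q (clamp (-1) 0 y)) x.
Proof.
  intros Hx. assert (Hmu := mu_pos).
  apply cont_mult; [apply Derive_Phi_clamp_continuous; lra|].
  apply (continuous_clamp_comp (-1) 0 x (fun v => bernoulli_defect q v)); auto.
  apply cont_plus; [apply cont_opp, bernoulli_continuous; auto|].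
  apply cont_div; [apply (pd_continuous_p (false :: nil)); simpl; auto; lia| |].
  - apply cont_pow, continuous_Derive_H.
  - apply pow_nonzero, Derive_H_neq_0; auto.
Qed.

Lemma defect_integrand_ex_RInt q :
  ex_RInt (fun t => Derive (Phi mu) t * bernoulli_defect q t) (-1) 0.
Proof.
  apply ex_RInt_ext with (fun y => Derive (Phi mu) (clamp (-1) 0 y)
                                   * bernoulli_defect q (clamp (-1) 0 y)).
  { intros x Hx. rewrite Rmin_left, Rmax_right in Hx by lra. rewrite clamp_id; lra. }
  apply (@ex_RInt_continuous R_CompleteNormedModule). intros z _.
  apply (continuous_clamp_comp_everywhere (-1) 0
           (fun t => Derive (Phi mu) t * bernoulli_defect q t)); [lra|].
  apply defect_integrand_clamp_continuous.
Qed.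

Lemma is_RInt_Phi_bernoulli q :
  is_RInt (fun t => Derive (Phi mu) t * bernoulli q t
                    + Phi mu t * (mu * Derive rho t * w q t - Dq_ratio q t)) (-1) 0
    (Phi mu 0 * bernoulli q 0 - Phi mu (-1) * bernoulli q (-1)).
Proof.
  assert (Hmu := mu_pos).
  apply (is_RInt_product_clamp (-1) 0 (Phi mu) (fun t => bernoulli q t)); try lra.
  - intros; apply Derive_correct, Phi_ex_derive; lra.
  - intros; apply bernoulli_is_derive; auto.
  - intros; apply Phi_clamp_continuous; lra.
  - intros; apply continuous_clamp_comp, bernoulli_continuous; auto.
  - intros; apply Derive_Phi_clamp_continuous; lra.
  - intros x Hx. apply (continuous_clamp_comp (-1) 0 x
      (fun t => mu * Derive rho t * w q t - Dq_ratio q t)); auto.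
    apply cont_minus.
    + apply cont_mult; [apply cont_mult; [apply continuous_const|] | apply w_continuous_p; auto].
      apply (Derive_rho_continuous _ _ Hbg); auto.
    + apply continuous_of_continuity_2d_pt, Dq_ratio_continuity_2d; auto.
Qed.

Lemma is_RInt_w_flux q :
  is_RInt (fun t => pd (false :: nil) w q t * flux H (Phi mu) t
                    + w q t * (mu * Derive rho t * Phi mu t)) (-1) 0
    (w q 0 * flux H (Phi mu) 0 - w q (-1) * flux H (Phi mu) (-1)).
Proof.
  assert (Hmu := mu_pos).
  apply (is_RInt_product_clamp (-1) 0 (fun t => w q t)); try lra.
  - intros; apply Derive_correct, (ex_derive_p_pd nil); simpl; lia.
  - intros; apply flux_is_derive; auto; lra.
  - intros; apply (continuous_clamp_comp (-1) 0 _ (fun t => w q t)), w_continuous_p; auto.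
  - intros; apply flux_clamp_continuous; lra.
  - intros; apply continuous_clamp_comp, (pd_continuous_p (false :: nil)); simpl; auto; lia.
  - intros x Hx. apply (continuous_clamp_comp (-1) 0 x
      (fun t => mu * Derive rho t * Phi mu t)); auto.
    apply cont_mult; [apply cont_mult; [apply continuous_const|] | apply continuous_Phi; lra].
    apply (Derive_rho_continuous _ _ Hbg); auto.
Qed.

(* The two integrations by parts combine by the equation of [Phi] into the
   defect integral; the boundary terms give [A w(q,0)] because
   [Phi(-1) = w(q,-1) = 0]. *)
Lemma ratio_integral_derivative_identity q :
  RInt (fun t => Phi mu t * Dq_ratio q t) (-1) 0 =
    - A_fun rho H Phi mu * w q 0
    - RInt (fun t => Derive (Phi mu) t * bernoulli_defect q t) (-1) 0.
Proof.
  assert (I := is_RInt_minus _ _ (-1) 0 _ _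
    (is_RInt_minus _ _ (-1) 0 _ _ (is_RInt_w_flux q) (is_RInt_Phi_bernoulli q))
    (@RInt_correct R_CompleteNormedModule _ _ _ (defect_integrand_ex_RInt q))).
  apply is_RInt_unique.
  replace (- A_fun rho H Phi mu * w q 0
           - RInt (fun t => Derive (Phi mu) t * bernoulli_defect q t) (-1) 0)
    with (minus (minus (w q 0 * flux H (Phi mu) 0 - w q (-1) * flux H (Phi mu) (-1))
                       (Phi mu 0 * bernoulli q 0 - Phi mu (-1) * bernoulli q (-1)))
                (RInt (fun t => Derive (Phi mu) t * bernoulli_defect q t) (-1) 0)).
  - eapply is_RInt_ext; [|exact I].
    intros x Hx. rewrite Rmin_left, Rmax_right in Hx by lra.
    unfold minus, plus, opp, flux, bernoulli_defect. simpl.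
    field. split; [apply Derive_H_neq_0; lra | destruct Heq; lra].
  - rewrite (w_bottom _ Hw), A_fun_flux, bernoulli_top, Phi_bottom by (apply Rlt_le, mu_pos).
    unfold minus, plus, opp. simpl. ring.
Qed.

Section DerivePhiNonneg.

Hypothesis HPhi_mono : forall p, -1 <= p <= 0 -> 0 <= Derive (Phi mu) p.

Lemma defect_integrand_nonneg q t : -1 <= t <= 0 ->
  0 <= Derive (Phi mu) t * bernoulli_defect q t.
Proof.
  intros Ht. apply Rmult_le_pos; [apply HPhi_mono; auto|].
  apply bernoulli_defect_nonneg; [apply hp_pos | apply (Derive_H_pos _ _ Hbg)]; auto.
Qed.

(* The ratio integral is nonincreasing in [q] and vanishes at infinity. *)
Lemma ratio_integral_derivative_zero : (forall q, 0 <= A_fun rho H Phi mu * w q 0) ->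
  forall q, RInt (fun t => Phi mu t * Dq_ratio q t) (-1) 0 = 0.
Proof.
  intros HAw. assert (Hmu := mu_pos).
  apply (derive_vanishing_of_nonincreasing (ratio_integral (Phi mu))).
  - intros q. apply ratio_integral_is_derive. intros; apply Phi_ex_derive; lra.
  - intros q. rewrite ratio_integral_derivative_identity.
    assert (0 <= RInt (fun t => Derive (Phi mu) t * bernoulli_defect q t) (-1) 0)
      by (apply RInt_ge_0; [lra | apply defect_integrand_ex_RInt |
                            intros; apply defect_integrand_nonneg; lra]).
    specialize (HAw q). lra.
  - apply ratio_integral_vanishing. intros; apply Phi_ex_derive; lra.
Qed.

Lemma A_w_top_zero : (forall q, 0 <= A_fun rho H Phi mu * w q 0) ->
  forall q, A_fun rho H Phi mu * w q 0 = 0.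
Proof.
  intros HAw q.
  assert (E := ratio_integral_derivative_identity q).
  rewrite ratio_integral_derivative_zero in E by auto.
  assert (0 <= RInt (fun t => Derive (Phi mu) t * bernoulli_defect q t) (-1) 0)
    by (apply RInt_ge_0; [lra | apply defect_integrand_ex_RInt |
                          intros; apply defect_integrand_nonneg; lra]).
  specialize (HAw q). lra.
Qed.

(* When [A = 0] the defect integral vanishes, and [Phi_p > 0] forces the defect,
   hence [h_q], to vanish. *)
Lemma hq_zero_of_A_zero : A_fun rho H Phi mu = 0 ->
  forall q t, -1 < t < 0 -> hq q t = 0.
Proof.
  intros HA q t Ht. assert (Hmu := mu_pos).
  assert (E := ratio_integral_derivative_identity q).
  rewrite ratio_integral_derivative_zero, HA in E by (intros; rewrite HA; lra).
  assert (Z : Derive (Phi mu) t * bernoulli_defect q t = 0).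
  { apply (RInt_nonneg_eq_0 (fun t => Derive (Phi mu) t * bernoulli_defect q t) (-1) 0);
      auto; try lra.
    - apply defect_integrand_clamp_continuous.
    - intros; apply defect_integrand_nonneg; lra.
    - apply defect_integrand_ex_RInt. }
  assert (HP := Derive_Phi_pos_of_Derive_nonneg mu Hmu HA HPhi_mono t ltac:(lra)).
  assert (HN : bernoulli_defect q t = 0)
    by (destruct (Rmult_integral _ _ Z); auto; lra).
  assert (Hh : 0 < hp q t) by (apply hp_pos; lra).
  assert (Q := bernoulli_defect_ge q t Hh ltac:(apply (Derive_H_pos _ _ Hbg); lra)).
  rewrite HN in Q.
  assert (0 < 2 * hp q t ^ 2) by (apply Rmult_lt_0_compat; [lra | apply pow_lt; lra]).
  assert (hq q t ^ 2 <= 0).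
  { apply Rmult_le_reg_r with (/ (2 * hp q t ^ 2)); [apply Rinv_0_lt_compat; lra|].
    rewrite Rmult_0_l. exact Q. }
  pose proof (pow2_ge_0 (hq q t)). nra.
Qed.

Lemma w_zero_of_A_zero : A_fun rho H Phi mu = 0 -> forall q p, in_Rbar q p -> w q p = 0.
Proof.
  intros HA.
  assert (Hint : forall q t, -1 < t < 0 -> w q t = 0).
  { intros q t Ht. apply (constant_vanishing_at_infinity (fun u => w u t)).
    - intros u. rewrite <- (hq_zero_of_A_zero HA u t Ht).
      apply Derive_correct, (ex_derive_q_pd nil); simpl; lia.
    - intros eps Heps. destruct ((pd_vanishing _ Hw) nil ltac:(simpl; lia) eps Heps) as [M HM].
      exists M. intros u Hu. apply (HM u t Hu). unfold in_Rbar; lra. }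
  intros q p Hp. unfold in_Rbar in Hp.
  destruct (Req_dec p (-1)) as [->|Hn1]; [apply (w_bottom _ Hw)|].
  destruct (Req_dec p 0) as [->|Hn0]; [|apply Hint; lra].
  apply (continuous_eq_of_interior (fun v => w q v) (-1) 0); try lra.
  - apply w_continuous_p; lra.
  - intros; apply Hint; auto.
Qed.

End DerivePhiNonneg.

End HeightEquation.

End Stratified.

Lemma inv_sq_inv_sqrt (m : R) : 0 < m -> / (/ sqrt m) ^ 2 = m.
Proof.
  intros Hm. rewrite pow_inv, Rinv_inv. simpl. rewrite Rmult_1_r. apply sqrt_sqrt. lra.
Qed.

Theorem theorem4p4
  (alpha : R) (rho H : R -> R) (Phi : R -> R -> R) (w : R -> R -> R) (F : R) :
  0 < alpha < 1 ->
  Ck_alpha_interval 2 alpha rho ->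
  (forall p, -1 <= p <= 0 -> 0 < rho p) ->
  (forall p, -1 <= p <= 0 -> Derive rho p <= 0) ->
  Ck_alpha_interval 3 alpha H ->
  H (-1) = 0 -> H 0 = 1 ->
  (forall p, -1 <= p <= 0 -> 0 < Derive H p) ->
  is_Phi rho H Phi ->
  in_X alpha w ->
  height_eq rho H w F ->
  ( ((forall q, 0 < w q 0) ->
     (forall p, -1 <= p <= 0 -> 0 <= Derive (Phi (/ F ^ 2)) p) ->
     A_fun rho H Phi (/ F ^ 2) < 0)
  /\
    (forall mu_cr, is_mu_cr rho H Phi mu_cr -> F = / sqrt mu_cr ->
     forall q p, in_Rbar q p -> w q p = 0) ).
Proof.
  intros _ Hrho Hrho_pos Hrho_nonpos HHreg _ HH0 HHp HPhi HX Heq.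
  assert (Hbg := regular_background_of_Ck alpha rho H Hrho Hrho_pos Hrho_nonpos HHreg HHp).
  assert (Hw := strip_regular_of_in_X alpha w HX).
  split.
  - intros Hw0 Hmono.
    destruct (Rlt_le_dec (A_fun rho H Phi (/ F ^ 2)) 0) as [|HA]; auto. exfalso.
    assert (HAw := A_w_top_zero rho H Phi Hbg HPhi w F Hw HH0 Heq Hmono
                     ltac:(intros q; apply Rmult_le_pos; [lra | left; apply Hw0]) 0).
    assert (HA0 : A_fun rho H Phi (/ F ^ 2) = 0)
      by (specialize (Hw0 0); destruct (Rmult_integral _ _ HAw); auto; lra).
    assert (Hw00 := w_zero_of_A_zero rho H Phi Hbg HPhi w F Hw HH0 Heq Hmono HA0 0 0
                      ltac:(unfold in_Rbar; lra)).
    specialize (Hw0 0). lra.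
  - intros mc Hcr HF.
    assert (Hmu : / F ^ 2 = mc) by (rewrite HF; apply inv_sq_inv_sqrt, Hcr).
    apply (w_zero_of_A_zero rho H Phi Hbg HPhi w F Hw HH0 Heq); rewrite Hmu.
    + intros p Hp. left. apply (Derive_Phi_mu_cr_pos rho H Phi Hbg HPhi mc Hcr p Hp).
    + apply Hcr.
Qed.
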